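(* Let $\alpha\in\mathbb{R}$, $\beta\ge 0$, and let $M_n=\sum_{i=1}^n\sigma(i)$ be the magnetization under the one-dimensional Ising measure $\mathbb{I}_{\alpha,\beta}$ on $\{\pm1\}^{\{1,\dots,n\}}$. Set $$\overline{m}=\frac{e^{\beta}\sinh\alpha}{\sqrt{e^{2\beta}\sinh^2\alpha+e^{-2\beta}}},\qquad t_n=n^{1/3}\,\frac{e^{-\beta}\cosh\alpha}{(e^{2\beta}\sinh^2\alpha+e^{-2\beta})^{3/2}},$$ $$\psi(z)=\exp\!\left(-\frac{2e^{\beta}\sinh^3\alpha+(3e^{\beta}-e^{-3\beta})\sinh\alpha}{6\,(e^{2\beta}\sinh^2\alpha+e^{-2\beta})^{5/2}}\,z^3\right).$$ Then $X_n=\frac{M_n-n\overline{m}}{n^{1/3}}$ converges in the complex mod-Gaussian sense with parameters $t_n$ and limiting function $\psi$, i.e. $$\mathbb{E}_{\alpha,\beta}\!\left[e^{zX_n}\right]e^{-t_n z^2/2}\longrightarrow \psi(z)$$ locally uniformly for $z$ in compact subsets of $\mathbb{C}$.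
   Context: The Ising measure $\mathbb{I}_{\alpha,\beta}$ on spin configurations $\sigma:\{1,\dots,n\}\to\{\pm1\}$ gives to $\sigma$ probability proportional to $\exp\big(\alpha\sum_{i=1}^n\sigma(i)+\beta\sum_{i=1}^{n-1}\sigma(i)\sigma(i+1)\big)$. $\mathbb{E}_{\alpha,\beta}$ denotes expectation under this measure. *)

From Stdlib Require Import Reals List.
Import ListNotations.
Open Scope R_scope.

Definition Cx : Type := (R * R)%type.
Definition Cadd (z w : Cx) : Cx := (fst z + fst w, snd z + snd w).
Definition Copp (z : Cx) : Cx := (- fst z, - snd z).
Definition Csub (z w : Cx) : Cx := Cadd z (Copp w).
Definition Cmul (z w : Cx) : Cx :=
  (fst z * fst w - snd z * snd w, fst z * snd w + snd z * fst w).
Definition Cscale (r : R) (z : Cx) : Cx := (r * fst z, r * snd z).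
Definition C0 : Cx := (0, 0).
Definition Cnorm (z : Cx) : R := sqrt (fst z ^ 2 + snd z ^ 2).
Definition Cexp (z : Cx) : Cx := (exp (fst z) * cos (snd z), exp (fst z) * sin (snd z)).

(* a configuration is a list of length n; true = +1, false = -1 *)
Definition spin (b : bool) : R := if b then 1 else -1.

Fixpoint configs (n : nat) : list (list bool) :=
  match n with
  | O => [nil]
  | S k => map (cons true) (configs k) ++ map (cons false) (configs k)
  end.

Definition magn (s : list bool) : R := fold_right (fun b acc => spin b + acc) 0 s.

Fixpoint nbr (s : list bool) : R :=
  match s with
  | b1 :: ((b2 :: _) as t) => spin b1 * spin b2 + nbr t
  | _ => 0
  end.

Definition ising_weight (a b : R) (s : list bool) : R := exp (a * magn s + b * nbr s).

Definition ising_Z (a b : R) (n : nat) : R :=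
  fold_right Rplus 0 (map (ising_weight a b) (configs n)).

Definition ising_E (a b : R) (n : nat) (f : list bool -> Cx) : Cx :=
  Cscale (/ ising_Z a b n)
    (fold_right Cadd C0 (map (fun s => Cscale (ising_weight a b s) (f s)) (configs n))).

Definition Dab (a b : R) : R := exp (2 * b) * (sinh a) ^ 2 + exp (-2 * b).

Definition mbar (a b : R) : R := exp b * sinh a / sqrt (Dab a b).

Definition cube_root_n (n : nat) : R := Rpower (INR n) (1 / 3).

Definition t_n (a b : R) (n : nat) : R :=
  cube_root_n n * (exp (- b) * cosh a / Rpower (Dab a b) (3 / 2)).

Definition psi_coef (a b : R) : R :=
  (2 * exp b * (sinh a) ^ 3 + (3 * exp b - exp (-3 * b)) * sinh a)
  / (6 * Rpower (Dab a b) (5 / 2)).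

Definition psi (a b : R) (z : Cx) : Cx := Cexp (Cscale (- psi_coef a b) (Cmul z (Cmul z z))).

Definition X_n (a b : R) (n : nat) (s : list bool) : R :=
  (magn s - INR n * mbar a b) / cube_root_n n.

Definition modG_seq (a b : R) (n : nat) (z : Cx) : Cx :=
  Cmul (ising_E a b n (fun s => Cexp (Cscale (X_n a b n s) z)))
       (Cexp (Cscale (- t_n a b n / 2) (Cmul z z))).

(* The magnetization generating function is a ratio of partition functions at complex field
   [alpha + h], [h = z / n^(1/3)], and the transfer matrix gives
   [Z_n(alpha + h) = c(h) lamP(h)^(n-1) + c'(h) lamM(h)^(n-1)] with [|lamM / lamP| < 1].  Near
   [h = 0], [log lamP(alpha + h)] equals its cubic Taylor polynomial [mbar h + sigma h^2 / 2
   + kappa h^3 / 6] up to [O(h^4)]; this is obtained without any logarithm, by checking that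
   [lamP(alpha) e^u] solves the characteristic equation up to [O(h^4)].  Raised to the power
   [n - 1], the error is [O(n h^4) = O(n^(-1/3))]; the linear term cancels the centering
   [n mbar], the quadratic one the Gaussian factor [e^(-t_n z^2 / 2)], and the cubic one yields
   [psi(z) = e^(kappa z^3 / 6)].  All remaining factors tend to [1] uniformly on compact sets. *)

From Stdlib Require Import Reals List Lra Lia Psatz Factorial.
From Coquelicot Require Import Coquelicot.
Import ListNotations.
Open Scope R_scope.

Lemma C_ext (z w : C) : fst z = fst w -> snd z = snd w -> z = w.
Proof. destruct z, w; simpl; intros; subst; reflexivity. Qed.

(* [Cexp] retyped on [C], so that numerals and the coercion [RtoC] elaborate. *)
Definition cexp (v : C) : C := Cexp v.

Lemma cexp_add (u v : C) : cexp (u + v)%C = (cexp u * cexp v)%C.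
Proof.
  destruct u as [x1 y1], v as [x2 y2]; unfold cexp, Cexp; simpl.
  rewrite exp_plus, cos_plus, sin_plus; apply C_ext; simpl; ring.
Qed.

Lemma cexp_0 : cexp 0 = 1.
Proof. unfold cexp, Cexp; simpl; rewrite exp_0, cos_0, sin_0; apply C_ext; simpl; ring. Qed.

Lemma cexp_RtoC (x : R) : cexp (RtoC x) = RtoC (exp x).
Proof. unfold cexp, Cexp, RtoC; simpl; rewrite cos_0, sin_0; apply C_ext; simpl; ring. Qed.

Lemma Cmod_cexp (v : C) : Cmod (cexp v) = exp (fst v).
Proof.
  destruct v as [x y]; unfold cexp, Cexp, Cmod; simpl.
  replace (exp x * cos y * (exp x * cos y * 1) + exp x * sin y * (exp x * sin y * 1))
    with (exp x * exp x * (sin y ^ 2 + cos y ^ 2)) by ring.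
  rewrite <- !Rsqr_pow2, sin2_cos2, Rmult_1_r, sqrt_square; auto.
  left; apply exp_pos.
Qed.

Lemma cexp_opp_r (v : C) : (cexp v * cexp (- v))%C = 1%C.
Proof. rewrite <- cexp_add, Cplus_opp_r; apply cexp_0. Qed.

Lemma cexp_neq0 (v : C) : cexp v <> 0%C.
Proof.
  intro H; pose proof (Cmod_cexp v) as E; rewrite H, Cmod_0 in E.
  pose proof (exp_pos (fst v)); lra.
Qed.

Lemma cexp_pow (v : C) (m : nat) : (cexp v ^ m)%C = cexp (RtoC (INR m) * v)%C.
Proof.
  induction m as [|m IH].
  - simpl; rewrite Cmult_0_l; symmetry; apply cexp_0.
  - change (cexp v ^ S m)%C with (cexp v * cexp v ^ m)%C.
    rewrite IH, <- cexp_add, S_INR, RtoC_plus; f_equal; ring.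
Qed.

Lemma exp_le_exp (x y : R) : x <= y -> exp x <= exp y.
Proof. intros [H|H]; [left; apply exp_increasing; lra | rewrite H; lra]. Qed.

Lemma Cmod_cexp_le (v : C) : Cmod (cexp v) <= exp (Cmod v).
Proof.
  rewrite Cmod_cexp; apply exp_le_exp.
  eapply Rle_trans; [apply Rle_abs | apply re_le_Cmod].
Qed.

(* Scalar MVT applied to the projection of [f] onto the direction of [f t]. *)
Lemma Cmod_mvt (f f' : R -> C) (t B : R) : 0 <= t ->
  (forall s, is_derive (fun s => fst (f s)) s (fst (f' s))) ->
  (forall s, is_derive (fun s => snd (f s)) s (snd (f' s))) ->
  f 0 = 0%C -> (forall s, 0 <= s <= t -> Cmod (f' s) <= B) ->
  Cmod (f t) <= B * t.
Proof.
  intros Ht D1 D2 F0 HB.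
  set (p := fst (f t)); set (q := snd (f t)).
  set (g := fun s => p * fst (f s) + q * snd (f s)).
  assert (Dg : forall s, is_derive g s (p * fst (f' s) + q * snd (f' s))).
  { intro s; apply (is_derive_plus (fun s => p * fst (f s)) (fun s => q * snd (f s)));
      apply is_derive_scal; auto. }
  destruct (MVT_gen g 0 t (fun s => p * fst (f' s) + q * snd (f' s))) as [c [Hc Heq]].
  - intros x _; apply Dg.
  - intros x _; apply continuity_pt_filterlim, (ex_derive_continuous g); eexists; apply Dg.
  - rewrite Rmin_left, Rmax_right in Hc by lra.
    unfold g in Heq; rewrite F0 in Heq; simpl in Heq.
    assert (Hsq : Cmod (f t) * Cmod (f t) = p * p + q * q).
    { unfold Cmod, p, q; rewrite sqrt_sqrt by nra; ring. }
    assert (Hcs : p * fst (f' c) + q * snd (f' c) <= Cmod (f t) * Cmod (f' c)).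
    { apply Rsqr_incr_0_var; [|apply Rmult_le_pos; apply Cmod_ge_0].
      unfold Cmod; rewrite Rsqr_mult, !Rsqr_sqrt by nra; unfold Rsqr, p, q.
      pose proof (pow2_ge_0 (fst (f t) * snd (f' c) - snd (f t) * fst (f' c))); nra. }
    pose proof (HB c Hc); pose proof (Cmod_ge_0 (f t)); pose proof (Cmod_ge_0 (f' c)).
    destruct (Req_dec (Cmod (f t)) 0) as [E|E]; [rewrite E; nra|].
    apply Rmult_le_reg_l with (Cmod (f t)); [lra|].
    rewrite Hsq; replace (p * p + q * q) with ((p * fst (f' c) + q * snd (f' c)) * t)
      by (rewrite Rminus_0_r in Heq; unfold p, q in *; lra).
    apply Rle_trans with (Cmod (f t) * Cmod (f' c) * t); [apply Rmult_le_compat_r; lra|].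
    rewrite Rmult_assoc; apply Rmult_le_compat_l; [lra|apply Rmult_le_compat_r; lra].
Qed.

Fixpoint exp_partial (n : nat) (v : C) : C :=
  match n with
  | O => 0
  | S k => exp_partial k v + v ^ k / INR (fact k)
  end.

Lemma INR_fact_neq0 (k : nat) : INR (fact k) <> 0.
Proof. apply not_0_INR, fact_neq_0. Qed.

Lemma exp_partial_term (s : R) (v : C) (k : nat) :
  ((RtoC s * v) ^ k / INR (fact k))%C = (RtoC (s ^ k / INR (fact k)) * v ^ k)%C.
Proof.
  pose proof (INR_fact_neq0 k).
  rewrite Cpow_mult_l, <- RtoC_pow; apply C_ext; simpl; field; auto.
Qed.

Lemma fst_Cplus (z w : C) : fst (z + w)%C = fst z + fst w.
Proof. reflexivity. Qed.
Lemma snd_Cplus (z w : C) : snd (z + w)%C = snd z + snd w.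
Proof. reflexivity. Qed.
Lemma fst_RtoC_mul (r : R) (w : C) : fst (RtoC r * w)%C = r * fst w.
Proof. simpl; ring. Qed.
Lemma snd_RtoC_mul (r : R) (w : C) : snd (RtoC r * w)%C = r * snd w.
Proof. simpl; ring. Qed.

Lemma is_derive_pow_div_fact (k : nat) (t : R) :
  is_derive (fun s => (s ^ S k / INR (fact (S k)))) t (t ^ k / INR (fact k)).
Proof.
  pose proof (INR_fact_neq0 k).
  apply (is_derive_ext (fun s => / INR (fact (S k)) * s ^ S k));
    [intro s; unfold Rdiv; apply Rmult_comm|].
  replace (t ^ k / INR (fact k)) with (/ INR (fact (S k)) * (INR (S k) * 1 * t ^ pred (S k))).
  - apply is_derive_scal, is_derive_Reals; rewrite Rmult_1_r; apply derivable_pt_lim_pow.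
  - change (fact (S k)) with (S k * fact k)%nat; rewrite mult_INR; simpl pred.
    field; split; auto; apply not_0_INR; lia.
Qed.

Lemma is_derive_exp_partial (v : C) (n : nat) (t : R) :
  is_derive (fun s => fst (exp_partial (S n) (RtoC s * v)%C)) t (fst (v * exp_partial n (RtoC t * v))%C) /\
  is_derive (fun s => snd (exp_partial (S n) (RtoC s * v)%C)) t (snd (v * exp_partial n (RtoC t * v))%C).
Proof.
  induction n as [|n [IH1 IH2]].
  - assert (E1 : forall w, exp_partial 1 w = RtoC 1) by (intro w; apply C_ext; simpl; field).
    assert (E0 : (v * exp_partial 0 (RtoC t * v))%C = RtoC 0) by (apply C_ext; simpl; ring).
    rewrite E0; split; [apply (is_derive_ext (fun _ => 1)) | apply (is_derive_ext (fun _ => 0))];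
      try (intro; rewrite E1; reflexivity); apply is_derive_Reals, derivable_pt_lim_const.
  - assert (Hstep : forall s, exp_partial (S (S n)) (RtoC s * v)
        = (exp_partial (S n) (RtoC s * v) + RtoC (s ^ S n / INR (fact (S n))) * v ^ S n)%C)
      by (intro s; rewrite <- exp_partial_term; reflexivity).
    assert (Hder : (v * exp_partial (S n) (RtoC t * v))%C
        = (v * exp_partial n (RtoC t * v) + RtoC (t ^ n / INR (fact n)) * v ^ S n)%C).
    { change (exp_partial (S n) ?w) with (exp_partial n w + w ^ n / INR (fact n))%C.
      rewrite exp_partial_term; simpl; ring. }
    rewrite Hder; split.
    + apply (is_derive_ext (fun s => fst (exp_partial (S n) (RtoC s * v)%C)
                                     + fst ((v ^ S n)%C) * (s ^ S n / INR (fact (S n))))).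
      { intro s; rewrite Hstep; simpl; ring. }
      rewrite fst_Cplus, fst_RtoC_mul, (Rmult_comm (t ^ n / _)).
      apply (is_derive_plus (fun s => fst (exp_partial (S n) (RtoC s * v)%C))
                            (fun s => fst ((v ^ S n)%C) * (s ^ S n / INR (fact (S n))))); [exact IH1|].
      apply is_derive_scal, is_derive_pow_div_fact.
    + apply (is_derive_ext (fun s => snd (exp_partial (S n) (RtoC s * v)%C)
                                     + snd ((v ^ S n)%C) * (s ^ S n / INR (fact (S n))))).
      { intro s; rewrite Hstep; simpl; ring. }
      rewrite snd_Cplus, snd_RtoC_mul, (Rmult_comm (t ^ n / _)).
      apply (is_derive_plus (fun s => snd (exp_partial (S n) (RtoC s * v)%C))
                            (fun s => snd ((v ^ S n)%C) * (s ^ S n / INR (fact (S n))))); [exact IH2|].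
      apply is_derive_scal, is_derive_pow_div_fact.
Qed.

Lemma is_derive_cexp_line (v : C) (t : R) :
  is_derive (fun s => fst (cexp (RtoC s * v))) t (fst (v * cexp (RtoC t * v))%C) /\
  is_derive (fun s => snd (cexp (RtoC s * v))) t (snd (v * cexp (RtoC t * v))%C).
Proof.
  destruct v as [x y]; unfold cexp, Cexp; simpl.
  split; [apply (is_derive_ext (fun s => exp (s * x - 0 * y) * cos (s * y + 0 * x)))
         |apply (is_derive_ext (fun s => exp (s * x - 0 * y) * sin (s * y + 0 * x)))];
    try (intro; reflexivity); auto_derive; auto; unfold Rminus; ring.
Qed.

Lemma exp_partial_at0 (n : nat) : exp_partial (S n) 0 = 1%C.
Proof.
  induction n as [|n IH].
  - apply C_ext; simpl; field.
  - change (exp_partial (S (S n)) 0) with (exp_partial (S n) 0 + 0 ^ S n / INR (fact (S n)))%C.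
    pose proof (INR_fact_neq0 (S n)); rewrite IH; apply C_ext; simpl in *; field; auto.
Qed.

Lemma Cmod_cexp_remainder_line (v : C) (n : nat) (t : R) : 0 <= t <= 1 ->
  Cmod (cexp (RtoC t * v) - exp_partial n (RtoC t * v)) <= (t * Cmod v) ^ n * exp (Cmod v).
Proof.
  revert t; induction n as [|n IH]; intros t Ht; pose proof (Cmod_ge_0 v).
  - replace (cexp (RtoC t * v) - exp_partial 0 (RtoC t * v))%C with (cexp (RtoC t * v))
      by (simpl; ring).
    rewrite Rmult_1_l; eapply Rle_trans; [apply Cmod_cexp_le|]; apply exp_le_exp.
    rewrite Cmod_mult, Cmod_R, Rabs_pos_eq by lra; nra.
  - replace ((t * Cmod v) ^ S n * exp (Cmod v))
      with (Cmod v * ((t * Cmod v) ^ n * exp (Cmod v)) * t) by (simpl; ring).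
    apply (Cmod_mvt (fun s => cexp (RtoC s * v) - exp_partial (S n) (RtoC s * v))%C
                    (fun s => v * (cexp (RtoC s * v) - exp_partial n (RtoC s * v)))%C); try lra.
    + intro s; destruct (is_derive_cexp_line v s) as [D _]; destruct (is_derive_exp_partial v n s) as [E _].
      replace (fst (v * (cexp (RtoC s * v) - exp_partial n (RtoC s * v)))%C)
        with (fst (v * cexp (RtoC s * v))%C - fst (v * exp_partial n (RtoC s * v))%C)
        by (simpl; ring).
      apply (is_derive_minus (fun s => fst (cexp (RtoC s * v)))
                             (fun s => fst (exp_partial (S n) (RtoC s * v)%C))); assumption.
    + intro s; destruct (is_derive_cexp_line v s) as [_ D]; destruct (is_derive_exp_partial v n s) as [_ E].
      replace (snd (v * (cexp (RtoC s * v) - exp_partial n (RtoC s * v)))%C)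
        with (snd (v * cexp (RtoC s * v))%C - snd (v * exp_partial n (RtoC s * v))%C)
        by (simpl; ring).
      apply (is_derive_minus (fun s => snd (cexp (RtoC s * v)))
                             (fun s => snd (exp_partial (S n) (RtoC s * v)%C))); assumption.
    + rewrite Cmult_0_l, exp_partial_at0, cexp_0; apply Cplus_opp_r.
    + intros s Hs; rewrite Cmod_mult; apply Rmult_le_compat_l; [lra|].
      eapply Rle_trans; [apply IH; lra|].
      apply Rmult_le_compat_r; [left; apply exp_pos|].
      apply pow_incr; split; [apply Rmult_le_pos|apply Rmult_le_compat_r]; lra.
Qed.

Lemma Cmod_cexp_taylor (v : C) (n : nat) :
  Cmod (cexp v - exp_partial n v) <= Cmod v ^ n * exp (Cmod v).
Proof.
  pose proof (Cmod_cexp_remainder_line v n 1) as H.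
  rewrite Cmult_1_l, Rmult_1_l in H; apply H; lra.
Qed.

Definition near0 (P : C -> Prop) : Prop := exists r, 0 < r /\ forall h, Cmod h <= r -> P h.

Lemma near0_ball (r : R) : 0 < r -> near0 (fun h => Cmod h <= r).
Proof. intros Hr; exists r; auto. Qed.

Lemma near0_and (P Q : C -> Prop) : near0 P -> near0 Q -> near0 (fun h => P h /\ Q h).
Proof.
  intros [r1 [H1 P1]] [r2 [H2 Q1]]; exists (Rmin r1 r2); split; [apply Rmin_glb_lt; auto|].
  intros h Hh; pose proof (Rmin_l r1 r2); pose proof (Rmin_r r1 r2); split; [apply P1 | apply Q1]; lra.
Qed.

Lemma near0_all (P : C -> Prop) : (forall h, P h) -> near0 P.
Proof. intros HP; exists 1; split; [lra | auto]. Qed.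

Lemma near0_imp (P Q : C -> Prop) : (forall h, P h -> Q h) -> near0 P -> near0 Q.
Proof. intros HPQ [r [Hr HP]]; exists r; auto. Qed.

Definition is_O0 (k : nat) (f : C -> C) : Prop :=
  exists K, near0 (fun h => Cmod (f h) <= K * Cmod h ^ k).

Lemma is_O0_ext (k : nat) (f g : C -> C) :
  near0 (fun h => f h = g h) -> is_O0 k g -> is_O0 k f.
Proof.
  intros E [K HK]; exists K; eapply near0_imp; [| exact (near0_and _ _ E HK)].
  intros h [-> H]; exact H.
Qed.

Lemma is_O0_const (c : C) : is_O0 0 (fun _ => c).
Proof. exists (Cmod c); apply near0_all; intros; simpl; lra. Qed.

Lemma is_O0_id : is_O0 1 (fun h => h).
Proof. exists 1; apply near0_all; intros; simpl; lra. Qed.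

Lemma is_O0_add (k : nat) (f g : C -> C) : is_O0 k f -> is_O0 k g -> is_O0 k (fun h => f h + g h)%C.
Proof.
  intros [K1 H1] [K2 H2]; exists (K1 + K2).
  eapply near0_imp; [| exact (near0_and _ _ H1 H2)]; intros h [? ?].
  eapply Rle_trans; [apply Cmod_triangle | lra].
Qed.

Lemma is_O0_mul (j k : nat) (f g : C -> C) :
  is_O0 j f -> is_O0 k g -> is_O0 (j + k) (fun h => f h * g h)%C.
Proof.
  intros [K1 H1] [K2 H2]; exists (K1 * K2).
  eapply near0_imp; [| exact (near0_and _ _ H1 H2)]; intros h [? ?].
  rewrite Cmod_mult, pow_add.
  replace (K1 * K2 * (Cmod h ^ j * Cmod h ^ k)) with ((K1 * Cmod h ^ j) * (K2 * Cmod h ^ k)) by ring.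
  apply Rmult_le_compat; auto; apply Cmod_ge_0.
Qed.

Lemma is_O0_scal (k : nat) (c : C) (f : C -> C) : is_O0 k f -> is_O0 k (fun h => c * f h)%C.
Proof. intros H; apply (is_O0_mul 0 k (fun _ => c)); [apply is_O0_const | exact H]. Qed.

Lemma is_O0_opp (k : nat) (f : C -> C) : is_O0 k f -> is_O0 k (fun h => - f h)%C.
Proof.
  intros H; apply (is_O0_ext _ _ (fun h => (- 1) * f h)%C); [|apply is_O0_scal, H].
  apply near0_all; intros; ring.
Qed.

Lemma is_O0_sub (k : nat) (f g : C -> C) : is_O0 k f -> is_O0 k g -> is_O0 k (fun h => f h - g h)%C.
Proof. intros Hf Hg; apply is_O0_add; [exact Hf | apply is_O0_opp, Hg]. Qed.

Lemma is_O0_weaken (j k : nat) (f : C -> C) : (j <= k)%nat -> is_O0 k f -> is_O0 j f.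
Proof.
  intros Hjk [K HK]; exists (Rmax K 0).
  eapply near0_imp; [| exact (near0_and _ _ HK (near0_ball 1 Rlt_0_1))]; intros h [H H1].
  pose proof (Cmod_ge_0 h); pose proof (Rmax_l K 0); pose proof (Rmax_r K 0).
  assert (Cmod h ^ k <= Cmod h ^ j).
  { replace k with (j + (k - j))%nat by lia; rewrite pow_add.
    pose proof (pow_le (Cmod h) j H0); pose proof (pow_le (Cmod h) (k - j) H0).
    assert (Cmod h ^ (k - j) <= 1) by (rewrite <- (pow1 (k - j)); apply pow_incr; lra); nra. }
  pose proof (pow_le (Cmod h) k H0); nra.
Qed.

Lemma is_O0_lin_bounded (f : C -> C) (f0 : C) : is_O0 1 (fun h => f h - f0)%C -> is_O0 0 f.
Proof.
  intros H; apply (is_O0_ext _ _ (fun h => (f h - f0) + f0)%C); [apply near0_all; intros; ring|].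
  apply (is_O0_add 0); [apply (is_O0_weaken 0 1); [lia | exact H] | apply is_O0_const].
Qed.

Lemma is_O0_lin_sub (f g : C -> C) (f0 g0 : C) :
  is_O0 1 (fun h => f h - f0)%C -> is_O0 1 (fun h => g h - g0)%C ->
  is_O0 1 (fun h => (f h - g h) - (f0 - g0))%C.
Proof.
  intros Hf Hg; apply (is_O0_ext _ _ (fun h => (f h - f0) - (g h - g0))%C);
    [apply near0_all; intros; ring | apply is_O0_sub; assumption].
Qed.

Lemma is_O0_lin_mul (f g : C -> C) (f0 g0 : C) :
  is_O0 1 (fun h => f h - f0)%C -> is_O0 1 (fun h => g h - g0)%C ->
  is_O0 1 (fun h => f h * g h - f0 * g0)%C.
Proof.
  intros Hf Hg.
  apply (is_O0_ext _ _ (fun h => (f h - f0) * g h + f0 * (g h - g0))%C); [apply near0_all; intros; ring|].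
  apply is_O0_add; [|apply is_O0_scal, Hg].
  apply (is_O0_mul 1 0); [exact Hf | apply (is_O0_lin_bounded g g0 Hg)].
Qed.

Lemma is_O0_bounded (f : C -> C) : is_O0 0 f -> exists B, near0 (fun h => Cmod (f h) <= B).
Proof. intros [K HK]; exists K; eapply near0_imp; [| exact HK]; intros h H; simpl in H; lra. Qed.

Lemma is_O0_small (k : nat) (f : C -> C) (eps : R) : (1 <= k)%nat -> 0 < eps ->
  is_O0 k f -> near0 (fun h => Cmod (f h) <= eps).
Proof.
  intros Hk Heps Hf; destruct (is_O0_weaken 1 k f Hk Hf) as [K HK].
  set (K' := Rmax K 1).
  assert (HK' : 0 < K') by (unfold K'; pose proof (Rmax_r K 1); lra).
  eapply near0_imp; [| exact (near0_and _ _ HK (near0_ball (eps / K') (Rdiv_lt_0_compat _ _ Heps HK')))].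
  intros h [H1 H2]; rewrite pow_1 in H1.
  pose proof (Rmax_l K 1); pose proof (Rmax_r K 1); pose proof (Cmod_ge_0 h).
  assert (K' * Cmod h <= eps).
  { apply (Rmult_le_compat_l K') in H2; [|fold K'; lra].
    replace (K' * (eps / K')) with eps in H2 by (field; fold K'; lra); exact H2. }
  fold K' in H, H0; nra.
Qed.

Lemma is_O0_away (f : C -> C) (f0 : C) : f0 <> 0%C -> is_O0 1 (fun h => f h - f0)%C ->
  near0 (fun h => Cmod f0 / 2 <= Cmod (f h)).
Proof.
  intros Hf0 Hf; pose proof (proj1 (Cmod_gt_0 f0) Hf0) as Hc.
  eapply near0_imp; [| exact (is_O0_small 1 _ (Cmod f0 / 2) (le_n 1) ltac:(lra) Hf)]; intros h H.
  pose proof (Cmod_triangle (f h - f0)%C (- f h)%C) as T.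
  replace (f h - f0 + - f h)%C with (- f0)%C in T by ring; rewrite !Cmod_opp in T; lra.
Qed.

Lemma is_O0_neq0 (f : C -> C) (f0 : C) : f0 <> 0%C -> is_O0 1 (fun h => f h - f0)%C ->
  near0 (fun h => f h <> 0%C).
Proof.
  intros Hf0 Hf; pose proof (proj1 (Cmod_gt_0 f0) Hf0) as Hc.
  eapply near0_imp; [| exact (is_O0_away f f0 Hf0 Hf)]; intros h H E.
  cbv beta in H; rewrite E, Cmod_0 in H; lra.
Qed.

Lemma is_O0_inv (f : C -> C) (f0 : C) : f0 <> 0%C -> is_O0 1 (fun h => f h - f0)%C ->
  is_O0 1 (fun h => / f h - / f0)%C /\ is_O0 0 (fun h => / f h)%C.
Proof.
  intros Hf0 Hf; pose proof (proj1 (Cmod_gt_0 f0) Hf0) as Hc.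
  pose proof (is_O0_neq0 f f0 Hf0 Hf) as Hnz.
  assert (Hb : is_O0 0 (fun h => / f h)%C).
  { exists (2 / Cmod f0); eapply near0_imp; [| exact (near0_and _ _ Hnz (is_O0_away f f0 Hf0 Hf))].
    intros h [Hn H]; rewrite Cmod_inv by auto; simpl; rewrite Rmult_1_r.
    replace (2 / Cmod f0) with (/ (Cmod f0 / 2)) by (field; lra).
    apply Rinv_le_contravar; lra. }
  split; [|exact Hb].
  apply (is_O0_ext _ _ (fun h => / f h * (- / f0) * (f h - f0))%C).
  - eapply near0_imp; [| exact Hnz]; intros h H; field; auto.
  - apply (is_O0_mul 0 1); [apply (is_O0_mul 0 0 _ (fun _ => - / f0)%C), is_O0_const|]; assumption.
Qed.

Lemma is_O0_cexp_remainder (n : nat) (v : C -> C) :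
  is_O0 1 v -> is_O0 n (fun h => cexp (v h) - exp_partial n (v h))%C.
Proof.
  intros [K HK]; exists (Rabs K ^ n * exp (Rabs K)).
  eapply near0_imp; [| exact (near0_and _ _ HK (near0_ball 1 Rlt_0_1))]; intros h [H H1].
  rewrite pow_1 in H; pose proof (Cmod_ge_0 h); pose proof (Cmod_ge_0 (v h)).
  pose proof (Rle_abs K); pose proof (Rabs_pos K).
  eapply Rle_trans; [apply Cmod_cexp_taylor|].
  replace (Rabs K ^ n * exp (Rabs K) * Cmod h ^ n) with ((Rabs K * Cmod h) ^ n * exp (Rabs K))
    by (rewrite Rpow_mult_distr; ring).
  apply Rmult_le_compat; [apply pow_le, Cmod_ge_0 | left; apply exp_pos | | apply exp_le_exp; nra].
  apply pow_incr; split; [apply Cmod_ge_0 | nra].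
Qed.

Lemma is_O0_id0 : is_O0 0 (fun h => h).
Proof. apply (is_O0_weaken 0 1); [lia | apply is_O0_id]. Qed.

Ltac is_O0_poly :=
  repeat first
    [ apply (is_O0_add 0) | apply (is_O0_sub 0) | apply (is_O0_mul 0 0)
    | apply is_O0_const | apply is_O0_id0 ].

Lemma exp_partial_1 (v : C) : exp_partial 1 v = 1%C.
Proof. apply C_ext; simpl; field. Qed.

Lemma exp_partial_4 (v : C) : exp_partial 4 v = (1 + v + v * v / 2 + v * v * v / 6)%C.
Proof.
  unfold exp_partial; apply C_ext; simpl; field.
Qed.

Lemma is_O0_cexp_sub1 (c : C) : is_O0 1 (fun h => cexp (c * h) - 1)%C.
Proof.
  apply (is_O0_ext _ _ (fun h => cexp (c * h) - exp_partial 1 (c * h))%C).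
  - apply near0_all; intros; rewrite exp_partial_1; reflexivity.
  - apply is_O0_cexp_remainder, is_O0_scal, is_O0_id.
Qed.

Definition cubic (c1 c2 c3 : R) (h : C) : C := (c1 * h + c2 * h * h + c3 * h * h * h)%C.

(* The Taylor polynomial of degree 3 in [h] of [exp (cubic c1 c2 c3 h)]. *)
Definition cubic_exp_taylor (c1 c2 c3 : R) (h : C) : C :=
  (1 + c1 * h + (c2 + c1 * c1 / 2) * h * h + (c3 + c1 * c2 + c1 * c1 * c1 / 6) * h * h * h)%C.

Lemma is_O0_cubic (c1 c2 c3 : R) : is_O0 1 (cubic c1 c2 c3).
Proof.
  apply (is_O0_ext _ _ (fun h => h * (c1 + c2 * h + c3 * h * h))%C).
  - apply near0_all; intros; unfold cubic; ring.
  - apply (is_O0_mul 1 0); [apply is_O0_id | is_O0_poly].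
Qed.

Lemma is_O0_cexp_cubic (c1 c2 c3 : R) :
  is_O0 4 (fun h => cexp (cubic c1 c2 c3 h) - cubic_exp_taylor c1 c2 c3 h)%C.
Proof.
  set (r := fun h : C => (c2 + c3 * h)%C).
  set (P := fun h : C => ((2 * c1 * c3 + r h * r h) / 2
                  + (3 * c1 * c1 * r h + 3 * c1 * h * r h * r h + h * h * r h * r h * r h) / 6)%C).
  apply (is_O0_ext _ _ (fun h => (cexp (cubic c1 c2 c3 h) - exp_partial 4 (cubic c1 c2 c3 h))
                                 + h * h * h * h * P h)%C).
  - apply near0_all; intros h.
    rewrite exp_partial_4; unfold P, r, cubic, cubic_exp_taylor; field.
  - apply is_O0_add; [apply is_O0_cexp_remainder, is_O0_cubic|].
    apply (is_O0_mul 4 0).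
    + apply (is_O0_mul 3 1); [apply (is_O0_mul 2 1); [apply (is_O0_mul 1 1)|]|]; apply is_O0_id.
    + unfold P, r; is_O0_poly.
Qed.

Lemma cubic_exp_taylor_combination (L M E1 E2 m sg k : R) (h : C) :
  L + M - E1 - E2 = 0 ->
  L * m - M * m - E1 + E2 = 0 ->
  L * (sg + m * m / 2) + M * (- sg + m * m / 2) - E1 / 2 - E2 / 2 = 0 ->
  L * (k + m * sg + m * m * m / 6) + M * (- k + - m * - sg + - m * - m * - m / 6) - E1 / 6 + E2 / 6 = 0 ->
  (L * cubic_exp_taylor m sg k h + M * cubic_exp_taylor (- m) (- sg) (- k) h)%C
  = (E1 * cubic_exp_taylor 1 0 0 h + E2 * cubic_exp_taylor (-1) 0 0 h)%C.
Proof.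
  intros K0 K1 K2 K3; unfold cubic_exp_taylor; destruct h as [x y]; apply C_ext; simpl.
  - transitivity (E1 + E2 + (L + M - E1 - E2) + (L * m - M * m - E1 + E2) * x
      + (L * (sg + m * m / 2) + M * (- sg + m * m / 2) - E1 / 2 - E2 / 2) * (x * x - y * y)
      + (L * (k + m * sg + m * m * m / 6) + M * (- k + - m * - sg + - m * - m * - m / 6) - E1 / 6 + E2 / 6)
        * (x * x * x - 3 * x * y * y)
      + E1 * (x + (x * x - y * y) / 2 + (x * x * x - 3 * x * y * y) / 6)
      - E2 * (x - (x * x - y * y) / 2 + (x * x * x - 3 * x * y * y) / 6)); [field|].
    rewrite K0, K1, K2, K3; field.
  - transitivity ((L * m - M * m - E1 + E2) * y
      + (L * (sg + m * m / 2) + M * (- sg + m * m / 2) - E1 / 2 - E2 / 2) * (2 * x * y)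
      + (L * (k + m * sg + m * m * m / 6) + M * (- k + - m * - sg + - m * - m * - m / 6) - E1 / 6 + E2 / 6)
        * (3 * x * x * y - y * y * y)
      + E1 * (y + x * y + (3 * x * x * y - y * y * y) / 6)
      + E2 * (- y + x * y - (3 * x * x * y - y * y * y) / 6)); [field|].
    rewrite K1, K2, K3; field.
Qed.

Section Transfer.
Variables a b : R.

(* [lamP] and [lamM] are the eigenvalues of the transfer matrix
   [[e^(b+a), e^(-b)], [e^(-b), e^(b-a)]], whose trace is [2 e^b cosh a]. *)
Definition sqD : R := sqrt (Dab a b).
Definition lamP : R := exp b * cosh a + sqD.
Definition lamM : R := exp b * cosh a - sqD.
Definition detT : R := exp b * exp b - / exp b * / exp b.
Definition sigma : R := exp (- b) * cosh a / Rpower (Dab a b) (3 / 2).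
Definition kappa : R := - 6 * psi_coef a b.

Lemma Dab_expand : Dab a b = exp b * exp b * sinh a ^ 2 + / exp b * / exp b.
Proof.
  unfold Dab; replace (2 * b) with (b + b) by ring; replace (-2 * b) with (- (b + b)) by ring.
  rewrite exp_Ropp, exp_plus; field; apply Rgt_not_eq, exp_pos.
Qed.

Lemma Dab_pos : 0 < Dab a b.
Proof.
  rewrite Dab_expand; pose proof (exp_pos b).
  pose proof (Rinv_0_lt_compat _ H); pose proof (pow2_ge_0 (exp b * sinh a)); nra.
Qed.

Lemma sqD_pos : 0 < sqD.
Proof. apply sqrt_lt_R0, Dab_pos. Qed.

Lemma sqD_sq : sqD * sqD = Dab a b.
Proof. apply sqrt_sqrt; left; apply Dab_pos. Qed.

Lemma cosh_sq : cosh a ^ 2 = 1 + sinh a ^ 2.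
Proof.
  unfold cosh, sinh; assert (exp a * exp (- a) = 1) by (rewrite <- exp_plus, Rplus_opp_r; apply exp_0).
  field_simplify; nra.
Qed.

Lemma cosh_pos : 0 < cosh a.
Proof. unfold cosh; pose proof (exp_pos a); pose proof (exp_pos (- a)); lra. Qed.

Lemma exp_cosh_sinh : exp a = cosh a + sinh a.
Proof. unfold cosh, sinh; field. Qed.

Lemma exp_opp_cosh_sinh : exp (- a) = cosh a - sinh a.
Proof. unfold cosh, sinh; field. Qed.

Lemma lamP_sub_lamM : lamP - lamM = 2 * sqD.
Proof. unfold lamP, lamM; ring. Qed.

Lemma lamP_add_lamM : lamP + lamM = exp b * exp a + exp b * exp (- a).
Proof. rewrite exp_cosh_sinh, exp_opp_cosh_sinh; unfold lamP, lamM; ring. Qed.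

Lemma lamP_mul_lamM : lamP * lamM = detT.
Proof.
  unfold lamP, lamM, detT.
  replace ((exp b * cosh a + sqD) * (exp b * cosh a - sqD))
    with (exp b * exp b * cosh a ^ 2 - sqD * sqD) by ring.
  rewrite cosh_sq, sqD_sq, Dab_expand; ring.
Qed.

Lemma Rabs_lamM_lt_lamP : Rabs lamM < lamP.
Proof.
  unfold lamM, lamP; pose proof sqD_pos; pose proof cosh_pos.
  pose proof (Rmult_lt_0_compat _ _ (exp_pos b) cosh_pos); apply Rabs_def1; lra.
Qed.

Lemma lamP_pos : 0 < lamP.
Proof. pose proof Rabs_lamM_lt_lamP; pose proof (Rabs_pos lamM); lra. Qed.

Lemma lamM_div_lamP_bound : 0 <= Rabs (lamM / lamP) < 1.
Proof.
  pose proof lamP_pos; pose proof Rabs_lamM_lt_lamP.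
  rewrite Rabs_div, (Rabs_pos_eq lamP) by lra; split.
  - apply Rmult_le_pos; [apply Rabs_pos | left; apply Rinv_0_lt_compat; lra].
  - apply Rmult_lt_reg_r with lamP; [lra|]; unfold Rdiv; rewrite Rmult_assoc, Rinv_l; lra.
Qed.

Lemma Rpower_Dab_3_2 : Rpower (Dab a b) (3 / 2) = Dab a b * sqD.
Proof.
  replace (3 / 2) with (1 + / 2) by field.
  rewrite Rpower_plus, Rpower_1, Rpower_sqrt by apply Dab_pos; reflexivity.
Qed.

Lemma Rpower_Dab_5_2 : Rpower (Dab a b) (5 / 2) = Dab a b * Dab a b * sqD.
Proof.
  replace (5 / 2) with (1 + (1 + / 2)) by field.
  rewrite !Rpower_plus, Rpower_1, Rpower_sqrt by apply Dab_pos; unfold sqD; ring.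
Qed.

(* [log lamP (a + h) = log lamP a + mbar h + sigma h^2 / 2 + kappa h^3 / 6 + O(h^4)]: with [u] this
   cubic in [h], [lamP e^u + lamM e^(-u)] matches the trace [e^b (e^(a+h) + e^(-a-h))] to order 3. *)
Lemma eigen_cubic_taylor (h : C) :
  (lamP * cubic_exp_taylor (mbar a b) (sigma / 2) (kappa / 6) h
   + lamM * cubic_exp_taylor (- mbar a b) (- (sigma / 2)) (- (kappa / 6)) h)%C
  = (RtoC (exp b * exp a) * cubic_exp_taylor 1 0 0 h
     + RtoC (exp b * exp (- a)) * cubic_exp_taylor (-1) 0 0 h)%C.
Proof.
  set (e := exp b) in *; set (s := sinh a); set (c := cosh a); set (q := sqD).
  assert (He : 0 < e) by apply exp_pos.
  assert (Hq : 0 < q) by apply sqD_pos.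
  assert (Hqq : q * q = e * e * s ^ 2 + / e * / e) by (unfold q; rewrite sqD_sq; apply Dab_expand).
  assert (Hcc : c ^ 2 = 1 + s ^ 2) by apply cosh_sq.
  assert (Hm : mbar a b = e * s / q) by reflexivity.
  assert (Hsg : sigma = c / (e * (q * q) * q)).
  { unfold sigma; rewrite Rpower_Dab_3_2, <- sqD_sq, exp_Ropp; fold e c q; field; lra. }
  assert (Hk : kappa = - (2 * e * s ^ 3 + (3 * e - / (e * e * e)) * s) / ((q * q) * (q * q) * q)).
  { unfold kappa, psi_coef; rewrite Rpower_Dab_5_2, <- sqD_sq.
    replace (-3 * b) with (- (b + b + b)) by ring; rewrite exp_Ropp, !exp_plus; fold e s q.
    field; lra. }
  assert (Hpos : 0 < e * e * s ^ 2 * (e * e) + 1) by (pose proof (pow2_ge_0 (e * e * s)); nra).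
  assert (K1 : lamP * mbar a b - lamM * mbar a b - e * (c + s) + e * (c - s) = 0).
  { unfold lamP, lamM; fold e c q; rewrite Hm; field; lra. }
  assert (K2 : lamP * (sigma / 2 + mbar a b * mbar a b / 2) + lamM * (- (sigma / 2) + mbar a b * mbar a b / 2)
               - e * (c + s) / 2 - e * (c - s) / 2 = 0).
  { unfold lamP, lamM; fold e c q; rewrite Hm, Hsg; field_simplify; [|lra..].
    replace (q ^ 3) with (q * (q * q)) by ring; rewrite Hqq; field; lra. }
  assert (K3 : lamP * (kappa / 6 + mbar a b * (sigma / 2) + mbar a b * mbar a b * mbar a b / 6)
               + lamM * (- (kappa / 6) + - mbar a b * - (sigma / 2)
                         + - mbar a b * - mbar a b * - mbar a b / 6)
               - e * (c + s) / 6 + e * (c - s) / 6 = 0).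
  { unfold lamP, lamM; fold e c q; rewrite Hm, Hsg, Hk; field_simplify; [|lra..].
    replace (q ^ 5) with (q * (q * q) * (q * q)) by ring; replace (q ^ 3) with (q * (q * q)) by ring.
    rewrite Hqq, Hcc; field; lra. }
  apply cubic_exp_taylor_combination; rewrite ?exp_cosh_sinh, ?exp_opp_cosh_sinh; fold e c s; auto.
  unfold lamP, lamM; fold e c q; ring.
Qed.

End Transfer.

Definition csqrt (z : C) : C :=
  (sqrt ((Cmod z + fst z) / 2),
   if Rle_dec 0 (snd z) then sqrt ((Cmod z - fst z) / 2) else - sqrt ((Cmod z - fst z) / 2)).

Lemma csqrt_sq (z : C) : (csqrt z * csqrt z)%C = z.
Proof.
  destruct z as [p q]; unfold csqrt; simpl.
  pose proof (re_le_Cmod (p, q)) as H1; unfold Re in H1; simpl in H1.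
  pose proof (Rle_abs p); pose proof (Rabs_maj2 p).
  assert (Hm : Cmod (p, q) * Cmod (p, q) = p * p + q * q)
    by (unfold Cmod; simpl; rewrite sqrt_sqrt by nra; ring).
  set (c := Cmod (p, q)) in *.
  assert (A : 0 <= (c + p) / 2) by lra; assert (B : 0 <= (c - p) / 2) by lra.
  assert (Hprod : sqrt ((c + p) / 2) * sqrt ((c - p) / 2) = Rabs q / 2).
  { rewrite <- sqrt_mult by auto.
    replace ((c + p) / 2 * ((c - p) / 2)) with ((Rabs q / 2) * (Rabs q / 2)).
    - apply sqrt_square; pose proof (Rabs_pos q); lra.
    - rewrite <- (Rabs_pos_eq (q * q)) in Hm by nra; rewrite Rabs_mult in Hm; nra. }
  apply C_ext; simpl; destruct (Rle_dec 0 q).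
  - rewrite !sqrt_sqrt by auto; field.
  - replace (sqrt ((c + p) / 2) * sqrt ((c + p) / 2) - - sqrt ((c - p) / 2) * - sqrt ((c - p) / 2))
      with (sqrt ((c + p) / 2) * sqrt ((c + p) / 2) - sqrt ((c - p) / 2) * sqrt ((c - p) / 2)) by ring.
    rewrite !sqrt_sqrt by auto; field.
  - replace (sqrt ((c + p) / 2) * sqrt ((c - p) / 2) + sqrt ((c - p) / 2) * sqrt ((c + p) / 2))
      with (2 * (sqrt ((c + p) / 2) * sqrt ((c - p) / 2))) by ring.
    rewrite Hprod, Rabs_pos_eq by auto; field.
  - replace (sqrt ((c + p) / 2) * - sqrt ((c - p) / 2) + - sqrt ((c - p) / 2) * sqrt ((c + p) / 2))
      with (- (2 * (sqrt ((c + p) / 2) * sqrt ((c - p) / 2)))) by ring.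
    rewrite Hprod, Rabs_left by lra; field.
Qed.

Lemma two_neq0 : (2 : C) <> 0%C.
Proof. intro E; apply (f_equal fst) in E; simpl in E; lra. Qed.

Section QuadraticRoots.
Variables (t d w : C).

Let r1 : C := ((t + csqrt (t * t - 4 * d)) / 2)%C.
Let r2 : C := ((t - csqrt (t * t - 4 * d)) / 2)%C.

Definition root_near : C := if Rle_dec (Cmod (w - r1)) (Cmod (w - r2)) then r1 else r2.
Definition root_far : C := (t - root_near)%C.

Lemma root_near_mul_far : (root_near * root_far)%C = d.
Proof.
  assert (H12 : (r1 * r2)%C = d).
  { unfold r1, r2.
    transitivity ((t * t - csqrt (t * t - 4 * d) * csqrt (t * t - 4 * d)) / 4)%C;
      [field | rewrite csqrt_sq; field]; intro E; apply (f_equal fst) in E; simpl in E; lra. }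
  pose proof two_neq0.
  unfold root_far, root_near; destruct Rle_dec.
  - replace (t - r1)%C with r2 by (unfold r1, r2; field; auto); exact H12.
  - replace (t - r2)%C with r1 by (unfold r1, r2; field; auto); rewrite Cmult_comm; exact H12.
Qed.

Lemma Cmod_sub_root_near_le : Cmod (w - root_near) <= Cmod (w - root_far).
Proof.
  pose proof two_neq0.
  unfold root_far, root_near; destruct Rle_dec.
  - replace (t - r1)%C with r2 by (unfold r1, r2; field; auto); auto.
  - replace (t - r2)%C with r1 by (unfold r1, r2; field; auto); lra.
Qed.

(* [2 w - t = (w - root_near) + (w - root_far)] and the second summand is the larger one. *)
Lemma Cmod_sub_root_near (s : R) : 0 < s -> s <= Cmod (2 * w - t)%C ->
  Cmod (w - root_near) <= 2 / s * Cmod (w * w - t * w + d)%C.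
Proof.
  intros Hs Hw.
  replace (w * w - t * w + d)%C with ((w - root_near) * (w - root_far))%C
    by (rewrite <- root_near_mul_far; unfold root_far; ring).
  rewrite Cmod_mult; pose proof Cmod_sub_root_near_le; pose proof (Cmod_ge_0 (w - root_near)).
  assert (Cmod (2 * w - t)%C <= Cmod (w - root_near) + Cmod (w - root_far)).
  { replace (2 * w - t)%C with ((w - root_near) + (w - root_far))%C by (unfold root_far; ring).
    apply Cmod_triangle. }
  apply Rle_trans with (2 / s * (Cmod (w - root_near) * (s / 2))); [right; field; lra|].
  apply Rmult_le_compat_l; [apply Rlt_le, Rdiv_lt_0_compat; lra|].
  apply Rmult_le_compat_l; lra.
Qed.

End QuadraticRoots.

(* Trace of the transfer matrix at complex field [x]. *)
Definition trace_at (b : R) (x : C) : C := (exp b * (cexp x + cexp (- x)))%C.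

Section PerturbedEigenvalues.
Variables a b : R.

(* [eig_near h] and [eig_far h] are the eigenvalues of the transfer matrix at field [a + h], told
   apart by their distance to the approximation [eig_approx h = lamP e^(log_eig_cubic h)]. *)
Definition log_eig_cubic (h : C) : C := cubic (mbar a b) (sigma a b / 2) (kappa a b / 6) h.
Definition eig_approx (h : C) : C := (lamP a b * cexp (log_eig_cubic h))%C.
Definition trace_shift (h : C) : C := trace_at b (a + h).
Definition eig_near (h : C) : C := root_near (trace_shift h) (detT b) (eig_approx h).
Definition eig_far (h : C) : C := root_far (trace_shift h) (detT b) (eig_approx h).

Lemma trace_expand (h : C) :
  trace_shift h = (RtoC (exp b * exp a) * cexp (cubic 1 0 0 h)
             + RtoC (exp b * exp (- a)) * cexp (cubic (-1) 0 0 h))%C.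
Proof.
  replace (cubic 1 0 0 h) with h by (unfold cubic; ring).
  replace (cubic (-1) 0 0 h) with (- h)%C by (unfold cubic; apply C_ext; simpl; ring).
  unfold trace_shift, trace_at.
  replace (- (RtoC a + h))%C with (RtoC (- a) + - h)%C by (apply C_ext; simpl; ring).
  rewrite !cexp_add, !cexp_RtoC, !RtoC_mult; ring.
Qed.

Lemma is_O0_trace_defect :
  is_O0 4 (fun h => lamP a b * cexp (log_eig_cubic h) + lamM a b * cexp (- log_eig_cubic h)
                    - trace_shift h)%C.
Proof.
  set (m := mbar a b); set (sg := sigma a b / 2); set (k := kappa a b / 6).
  apply (is_O0_ext _ _ (fun h =>
      lamP a b * (cexp (cubic m sg k h) - cubic_exp_taylor m sg k h)
    + lamM a b * (cexp (cubic (- m) (- sg) (- k) h) - cubic_exp_taylor (- m) (- sg) (- k) h)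
    - RtoC (exp b * exp a) * (cexp (cubic 1 0 0 h) - cubic_exp_taylor 1 0 0 h)
    - RtoC (exp b * exp (- a)) * (cexp (cubic (-1) 0 0 h) - cubic_exp_taylor (-1) 0 0 h))%C).
  - apply near0_all; intros h.
    assert (Hu : (- log_eig_cubic h)%C = cubic (- m) (- sg) (- k) h).
    { unfold log_eig_cubic, cubic; rewrite !RtoC_opp; fold m sg k; ring. }
    pose proof (eigen_cubic_taylor a b h) as E; fold m sg k in E.
    rewrite Hu, trace_expand; unfold log_eig_cubic; fold m sg k.
    match goal with |- _ = ?R => transitivity (R + ((lamP a b * cubic_exp_taylor m sg k h
       + lamM a b * cubic_exp_taylor (- m) (- sg) (- k) h)
       - (RtoC (exp b * exp a) * cubic_exp_taylor 1 0 0 h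
          + RtoC (exp b * exp (- a)) * cubic_exp_taylor (-1) 0 0 h)))%C end; [ring|].
    rewrite E; ring.
  - repeat apply is_O0_sub; try apply is_O0_add; apply is_O0_scal, is_O0_cexp_cubic.
Qed.

Lemma RtoC_neq0 (x : R) : x <> 0 -> RtoC x <> 0%C.
Proof. intros Hx E; apply (f_equal fst) in E; simpl in E; lra. Qed.

Lemma is_O0_eig_approx : is_O0 1 (fun h => eig_approx h - lamP a b)%C.
Proof.
  apply (is_O0_ext _ _ (fun h => lamP a b * (cexp (log_eig_cubic h) - exp_partial 1 (log_eig_cubic h)))%C).
  - apply near0_all; intros h; rewrite exp_partial_1; unfold eig_approx; ring.
  - apply is_O0_scal, is_O0_cexp_remainder, is_O0_cubic.
Qed.

Lemma is_O0_trace_shift : is_O0 1 (fun h => trace_shift h - (lamP a b + lamM a b))%C.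
Proof.
  apply (is_O0_ext _ _ (fun h =>
      RtoC (exp b * exp a) * (cexp (cubic 1 0 0 h) - exp_partial 1 (cubic 1 0 0 h))
    + RtoC (exp b * exp (- a)) * (cexp (cubic (-1) 0 0 h) - exp_partial 1 (cubic (-1) 0 0 h)))%C).
  - apply near0_all; intros h; rewrite !exp_partial_1, trace_expand.
    rewrite <- RtoC_plus, lamP_add_lamM, RtoC_plus; ring.
  - apply is_O0_add; apply is_O0_scal, is_O0_cexp_remainder, is_O0_cubic.
Qed.

Lemma is_O0_char_poly_eig_approx :
  is_O0 4 (fun h => eig_approx h * eig_approx h - trace_shift h * eig_approx h + detT b)%C.
Proof.
  apply (is_O0_ext _ _ (fun h => eig_approx h * (lamP a b * cexp (log_eig_cubic h)
                         + lamM a b * cexp (- log_eig_cubic h) - trace_shift h))%C).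
  - apply near0_all; intros h; unfold eig_approx.
    rewrite <- (lamP_mul_lamM a b), RtoC_mult, <- (Cmult_1_r (RtoC (lamP a b) * RtoC (lamM a b))),
      <- (cexp_opp_r (log_eig_cubic h)); ring.
  - apply (is_O0_mul 0 4); [|apply is_O0_trace_defect].
    apply (is_O0_ext _ _ (fun h => (eig_approx h - lamP a b) + lamP a b)%C);
      [apply near0_all; intros; ring|].
    apply (is_O0_add 0); [apply (is_O0_weaken 0 1); [lia | apply is_O0_eig_approx] | apply is_O0_const].
Qed.

Lemma near0_root_gap : near0 (fun h => sqD a b <= Cmod (2 * eig_approx h - trace_shift h)%C).
Proof.
  pose proof (sqD_pos a b) as Hs.
  assert (H2s : RtoC (2 * sqD a b) <> 0%C) by (apply RtoC_neq0; lra).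
  assert (Hg : is_O0 1 (fun h => 2 * eig_approx h - trace_shift h - 2 * sqD a b)%C).
  { apply (is_O0_ext _ _ (fun h =>
      2 * (eig_approx h - lamP a b) - (trace_shift h - (lamP a b + lamM a b)))%C).
    - apply near0_all; intros h.
      unfold lamP, lamM; apply C_ext; simpl; ring.
    - apply is_O0_sub; [apply is_O0_scal, is_O0_eig_approx | apply is_O0_trace_shift]. }
  rewrite RtoC_mult in H2s.
  eapply near0_imp; [| exact (is_O0_away _ _ H2s Hg)].
  intros h H; rewrite <- RtoC_mult, Cmod_R, Rabs_pos_eq in H by lra; lra.
Qed.

Lemma is_O0_eig_approx_sub_near : is_O0 4 (fun h => eig_approx h - eig_near h)%C.
Proof.
  pose proof (sqD_pos a b) as Hs.
  destruct is_O0_char_poly_eig_approx as [K HK]; exists (2 / sqD a b * K).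
  eapply near0_imp; [| exact (near0_and _ _ HK near0_root_gap)]; intros h [HQ Hgap].
  eapply Rle_trans; [apply Cmod_sub_root_near; eauto|].
  rewrite Rmult_assoc; apply Rmult_le_compat_l; [apply Rlt_le, Rdiv_lt_0_compat|]; lra.
Qed.

Lemma is_O0_eig_near : is_O0 1 (fun h => eig_near h - lamP a b)%C.
Proof.
  apply (is_O0_ext _ _ (fun h => (eig_approx h - lamP a b) - (eig_approx h - eig_near h))%C);
    [apply near0_all; intros; ring|].
  apply is_O0_sub; [apply is_O0_eig_approx|].
  apply (is_O0_weaken 1 4); [lia | apply is_O0_eig_approx_sub_near].
Qed.

Lemma is_O0_eig_far : is_O0 1 (fun h => eig_far h - lamM a b)%C.
Proof.
  apply (is_O0_ext _ _ (fun h => (trace_shift h - (lamP a b + lamM a b)) - (eig_near h - lamP a b))%C);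
    [apply near0_all; intros; unfold eig_far, eig_near, root_far; ring|].
  apply is_O0_sub; [apply is_O0_trace_shift | apply is_O0_eig_near].
Qed.

Lemma is_O0_eig_near_div_approx : is_O0 4 (fun h => eig_near h / eig_approx h - 1)%C.
Proof.
  assert (HL : RtoC (lamP a b) <> 0%C) by (apply RtoC_neq0; pose proof (lamP_pos a b); lra).
  destruct (is_O0_inv _ _ HL is_O0_eig_approx) as [_ Hinv].
  apply (is_O0_ext _ _ (fun h => - / eig_approx h * (eig_approx h - eig_near h))%C).
  - eapply near0_imp; [| exact (is_O0_neq0 _ _ HL is_O0_eig_approx)]; intros h H; field; auto.
  - apply (is_O0_mul 0 4); [apply is_O0_opp, Hinv | apply is_O0_eig_approx_sub_near].
Qed.

End PerturbedEigenvalues.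

Definition Csum {A : Type} (f : A -> C) (l : list A) : C := fold_right Cplus 0%C (map f l).

Lemma Csum_app {A : Type} (f : A -> C) (l1 l2 : list A) : Csum f (l1 ++ l2) = (Csum f l1 + Csum f l2)%C.
Proof. unfold Csum; rewrite map_app; induction l1; simpl; [ring | rewrite IHl1; ring]. Qed.

Lemma Csum_scal {A : Type} (k : C) (f : A -> C) (l : list A) :
  Csum (fun s => k * f s)%C l = (k * Csum f l)%C.
Proof. unfold Csum; induction l; simpl; [ring | rewrite IHl; ring]. Qed.

Lemma Csum_ext {A : Type} (f g : A -> C) (l : list A) : (forall s, f s = g s) -> Csum f l = Csum g l.
Proof. intros E; unfold Csum; f_equal; apply map_ext; auto. Qed.

Lemma Csum_map {A B : Type} (f : B -> C) (g : A -> B) (l : list A) :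
  Csum f (map g l) = Csum (fun s => f (g s)) l.
Proof. unfold Csum; rewrite map_map; reflexivity. Qed.

Lemma Csum_minus {A : Type} (f g : A -> C) (l : list A) :
  (Csum f l - Csum g l)%C = Csum (fun s => f s - g s)%C l.
Proof. unfold Csum; induction l; simpl; [ring | rewrite <- IHl; ring]. Qed.

Lemma Csum_RtoC {A : Type} (f : A -> R) (l : list A) :
  Csum (fun s => RtoC (f s)) l = RtoC (fold_right Rplus 0 (map f l)).
Proof. unfold Csum; induction l; simpl; [reflexivity | rewrite IHl, RtoC_plus; reflexivity]. Qed.

Lemma is_O0_Csum {A : Type} (k : nat) (F : A -> C -> C) (l : list A) :
  (forall s, is_O0 k (F s)) -> is_O0 k (fun h => Csum (fun s => F s h) l).
Proof.
  intros H; induction l as [|s l IH].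
  - exists 0; apply near0_all; intros; unfold Csum; simpl; rewrite Cmod_0; lra.
  - apply (is_O0_add k (F s) (fun h => Csum (fun s => F s h) l)); auto.
Qed.

Section PartitionFunction.
Variable b : R.

Definition weight (x : C) (s : list bool) : C := cexp (x * magn s + RtoC (b * nbr s)).
Definition Zc (n : nat) (x : C) : C := Csum (weight x) (configs n).

Lemma Zc_real (a : R) (n : nat) : Zc n (RtoC a) = RtoC (ising_Z a b n).
Proof.
  unfold Zc, ising_Z; rewrite <- Csum_RtoC; apply Csum_ext; intros s.
  unfold weight, ising_weight; rewrite <- cexp_RtoC; f_equal; apply C_ext; simpl; ring.
Qed.

Let Zc_first (n : nat) (c : bool) (x : C) : C := Csum (fun s => weight x (c :: s)) (configs n).

Let Zc_S (n : nat) (x : C) : Zc (S n) x = (Zc_first n true x + Zc_first n false x)%C.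
Proof. unfold Zc, Zc_first; simpl; rewrite Csum_app, !Csum_map; reflexivity. Qed.

Let Zc_first_S (n : nat) (c : bool) (x : C) : Zc_first (S n) c x =
  (cexp (x * spin c + RtoC (b * spin c * 1)) * Zc_first n true x
   + cexp (x * spin c + RtoC (b * spin c * (-1))) * Zc_first n false x)%C.
Proof.
  assert (Hsplit : forall d s, weight x (c :: d :: s)
            = (cexp (x * spin c + RtoC (b * spin c * spin d)) * weight x (d :: s))%C).
  { intros d s; unfold weight; rewrite <- cexp_add; f_equal.
    change (magn (c :: d :: s)) with (spin c + magn (d :: s)).
    change (nbr (c :: d :: s)) with (spin c * spin d + nbr (d :: s)).
    apply C_ext; simpl; ring. }
  unfold Zc_first; simpl; rewrite Csum_app, !Csum_map, <- !Csum_scal.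
  f_equal; apply Csum_ext; intro s; apply Hsplit.
Qed.

Lemma Zc_rec (n : nat) (x : C) :
  Zc (S (S (S n))) x = (trace_at b x * Zc (S (S n)) x - detT b * Zc (S n) x)%C.
Proof.
  assert (Hc : forall k e : R, cexp (x * k + RtoC e) = (cexp (k * x) * exp e)%C)
    by (intros k e; rewrite <- cexp_RtoC, <- cexp_add; f_equal; ring).
  assert (Hinv : cexp (- x) = (/ cexp x)%C)
    by (rewrite <- (Cmult_1_l (/ cexp x)), <- (cexp_opp_r x); field; apply cexp_neq0).
  rewrite !Zc_S, !Zc_first_S; unfold trace_at, detT; simpl spin; rewrite !Hc.
  replace (RtoC 1 * x)%C with x by ring; replace (RtoC (-1) * x)%C with (- x)%C by (apply C_ext; simpl; ring).
  replace (b * 1 * 1) with b by ring; replace (b * -1 * -1) with b by ring.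
  replace (b * 1 * -1) with (- b) by ring; replace (b * -1 * 1) with (- b) by ring.
  rewrite Hinv, exp_Ropp; pose proof (cexp_neq0 x); pose proof (exp_pos b).
  rewrite !RtoC_minus, !RtoC_mult, !RtoC_inv by lra; field; split; [apply RtoC_neq0; lra | auto].
Qed.

Lemma is_O0_Zc (a : R) (k : nat) : is_O0 1 (fun h => Zc k (a + h) - Zc k a)%C.
Proof.
  apply (is_O0_ext _ _ (fun h => Csum (fun s => weight a s * (cexp (magn s * h) - 1)) (configs k))%C).
  - apply near0_all; intros h; unfold Zc.
    rewrite Csum_minus; apply Csum_ext; intro s; unfold weight.
    replace (cexp ((a + h) * magn s + RtoC (b * nbr s)))
      with (cexp (a * magn s + RtoC (b * nbr s)) * cexp (magn s * h))%C
      by (rewrite <- cexp_add; f_equal; ring).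
    ring.
  - apply (is_O0_Csum 1 (fun s h => weight a s * (cexp (magn s * h) - 1))%C); intro s.
    apply is_O0_scal, is_O0_cexp_sub1.
Qed.

End PartitionFunction.

Lemma linear_rec2_closed_form (Z : nat -> C) (t d l l' : C) :
  (forall n, Z (S (S (S n))) = (t * Z (S (S n)) - d * Z (S n))%C) ->
  (l + l')%C = t -> (l * l')%C = d -> (l - l')%C <> 0%C ->
  forall n, Z (S n) = ((Z 2%nat - l' * Z 1%nat) / (l - l') * l ^ n
                       + (l * Z 1%nat - Z 2%nat) / (l - l') * l' ^ n)%C.
Proof.
  intros Hrec Ht Hd Hl.
  assert (forall n, Z (S n) = ((Z 2%nat - l' * Z 1%nat) / (l - l') * l ^ n
                               + (l * Z 1%nat - Z 2%nat) / (l - l') * l' ^ n)%C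
             /\ Z (S (S n)) = ((Z 2%nat - l' * Z 1%nat) / (l - l') * l ^ S n
                               + (l * Z 1%nat - Z 2%nat) / (l - l') * l' ^ S n)%C) as H.
  { induction n as [|n [A B]].
    - split; simpl; field; auto.
    - split; auto; rewrite Hrec, A, B, <- Ht, <- Hd; simpl; field; auto. }
  intros n; apply H.
Qed.

Lemma configs_nonnil (n : nat) : configs n <> [].
Proof. induction n; simpl; [discriminate|]; destruct (configs n); [congruence | discriminate]. Qed.

Lemma ising_Z_pos (a b : R) (n : nat) : 0 < ising_Z a b n.
Proof.
  assert (Hw : forall l, 0 <= fold_right Rplus 0 (map (ising_weight a b) l)).
  { induction l as [|s l IH]; simpl; [lra|]; pose proof (exp_pos (a * magn s + b * nbr s)).
    unfold ising_weight at 1; lra. }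
  unfold ising_Z; pose proof (configs_nonnil n); destruct (configs n) as [|s l]; [congruence|].
  simpl; pose proof (Hw l); pose proof (exp_pos (a * magn s + b * nbr s)).
  unfold ising_weight at 1; lra.
Qed.

Lemma ising_Z_1 (a b : R) : ising_Z a b 1 = exp a + exp (- a).
Proof.
  unfold ising_Z, ising_weight, magn; simpl.
  replace (a * (1 + 0) + b * 0) with a by ring; replace (a * (-1 + 0) + b * 0) with (- a) by ring; ring.
Qed.

Lemma ising_Z_2 (a b : R) :
  ising_Z a b 2 = exp b * (exp a * exp a) + 2 * / exp b + exp b * (exp (- a) * exp (- a)).
Proof.
  unfold ising_Z, ising_weight, magn; simpl.
  replace (a * (1 + (1 + 0)) + b * (1 * 1 + 0)) with (b + (a + a)) by ring.
  replace (a * (1 + (-1 + 0)) + b * (1 * -1 + 0)) with (- b) by ring.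
  replace (a * (-1 + (1 + 0)) + b * (-1 * 1 + 0)) with (- b) by ring.
  replace (a * (-1 + (-1 + 0)) + b * (-1 * -1 + 0)) with (b + (- a + - a)) by ring.
  rewrite !exp_plus, exp_Ropp; ring.
Qed.

Section Coefficients.
Variables a b : R.

(* [Z_(m+1) = c0P lamP^m + c0M lamM^m] at real field [a], and its perturbation at [a + h]. *)
Definition c0P : R := (ising_Z a b 2 - lamM a b * ising_Z a b 1) / (lamP a b - lamM a b).
Definition c0M : R := (lamP a b * ising_Z a b 1 - ising_Z a b 2) / (lamP a b - lamM a b).
Definition coefP (h : C) : C :=
  ((Zc b 2 (a + h) - eig_far a b h * Zc b 1 (a + h)) / (eig_near a b h - eig_far a b h))%C.
Definition coefM (h : C) : C :=
  ((eig_near a b h * Zc b 1 (a + h) - Zc b 2 (a + h)) / (eig_near a b h - eig_far a b h))%C.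

Lemma lamP_sub_lamM_neq0 : lamP a b - lamM a b <> 0.
Proof. rewrite lamP_sub_lamM; pose proof (sqD_pos a b); lra. Qed.

Lemma c0P_pos : 0 < c0P.
Proof.
  unfold c0P; rewrite lamP_sub_lamM, ising_Z_1, ising_Z_2, (exp_cosh_sinh a), (exp_opp_cosh_sinh a).
  unfold lamM.
  pose proof (sqD_pos a b); pose proof (exp_pos b); pose proof (cosh_pos a).
  replace (exp b * ((cosh a + sinh a) * (cosh a + sinh a)) + 2 * / exp b
           + exp b * ((cosh a - sinh a) * (cosh a - sinh a))
           - (exp b * cosh a - sqD a b) * (cosh a + sinh a + (cosh a - sinh a)))
    with (2 * exp b * sinh a ^ 2 + 2 * / exp b + 2 * sqD a b * cosh a) by ring.
  apply Rdiv_lt_0_compat; [|lra].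
  pose proof (Rinv_0_lt_compat _ H0); pose proof (pow2_ge_0 (sinh a)).
  pose proof (Rmult_lt_0_compat _ _ H H1); pose proof (Rmult_le_pos _ _ (Rlt_le _ _ H0) H3); lra.
Qed.

Lemma ising_Z_closed_form (m : nat) :
  RtoC (ising_Z a b (S m)) = (c0P * lamP a b ^ m + c0M * lamM a b ^ m)%C.
Proof.
  pose proof lamP_sub_lamM_neq0 as HLM.
  rewrite <- Zc_real.
  rewrite (linear_rec2_closed_form (fun n => Zc b n (RtoC a)) (trace_at b a) (detT b) (lamP a b) (lamM a b)).
  - rewrite !Zc_real; unfold c0P, c0M; apply C_ext; simpl; field; auto.
  - intro n; apply Zc_rec.
  - unfold trace_at; replace (- RtoC a)%C with (RtoC (- a)) by (apply C_ext; simpl; ring).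
    rewrite !cexp_RtoC; apply C_ext; simpl; [rewrite lamP_add_lamM|]; ring.
  - rewrite <- RtoC_mult, lamP_mul_lamM; reflexivity.
  - rewrite <- RtoC_minus; apply RtoC_neq0, HLM.
Qed.

Lemma is_O0_eig_gap : is_O0 1 (fun h => (eig_near a b h - eig_far a b h) - (lamP a b - lamM a b))%C.
Proof.
  apply (is_O0_ext _ _ (fun h => (eig_near a b h - lamP a b) - (eig_far a b h - lamM a b))%C);
    [apply near0_all; intros; ring | apply is_O0_sub; [apply is_O0_eig_near | apply is_O0_eig_far]].
Qed.

Lemma near0_eig_near_neq_far : near0 (fun h => (eig_near a b h - eig_far a b h)%C <> 0%C).
Proof.
  assert (H : RtoC (lamP a b - lamM a b) <> 0%C) by apply RtoC_neq0, lamP_sub_lamM_neq0.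
  rewrite RtoC_minus in H.
  eapply near0_imp; [| exact (is_O0_neq0 _ _ H is_O0_eig_gap)]; intros h Hh E.
  apply Hh; rewrite E; ring.
Qed.

Lemma Zc_closed_form (h : C) : (eig_near a b h - eig_far a b h)%C <> 0%C ->
  forall m, Zc b (S m) (a + h) = (coefP h * eig_near a b h ^ m + coefM h * eig_far a b h ^ m)%C.
Proof.
  intros Hne; apply (linear_rec2_closed_form (fun n => Zc b n (a + h)) (trace_shift a b h) (detT b)); auto.
  - intro n; apply Zc_rec.
  - unfold eig_near, eig_far, root_far; ring.
  - apply root_near_mul_far.
Qed.

Lemma is_O0_coefP : is_O0 1 (fun h => coefP h - c0P)%C.
Proof.
  assert (H : RtoC (lamP a b - lamM a b) <> 0%C) by apply RtoC_neq0, lamP_sub_lamM_neq0.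
  rewrite RtoC_minus in H; destruct (is_O0_inv _ _ H is_O0_eig_gap) as [Hinv _].
  unfold coefP, c0P; rewrite RtoC_div, !RtoC_minus, RtoC_mult, <- !(Zc_real b a)
    by apply lamP_sub_lamM_neq0.
  apply is_O0_lin_mul; [|exact Hinv].
  apply is_O0_lin_sub; [apply is_O0_Zc | apply is_O0_lin_mul; [apply is_O0_eig_far | apply is_O0_Zc]].
Qed.

Lemma is_O0_coefM : is_O0 1 (fun h => coefM h - c0M)%C.
Proof.
  assert (H : RtoC (lamP a b - lamM a b) <> 0%C) by apply RtoC_neq0, lamP_sub_lamM_neq0.
  rewrite RtoC_minus in H; destruct (is_O0_inv _ _ H is_O0_eig_gap) as [Hinv _].
  unfold coefM, c0M; rewrite RtoC_div, !RtoC_minus, RtoC_mult, <- !(Zc_real b a)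
    by apply lamP_sub_lamM_neq0.
  apply is_O0_lin_mul; [|exact Hinv].
  apply is_O0_lin_sub; [apply is_O0_lin_mul; [apply is_O0_eig_near | apply is_O0_Zc] | apply is_O0_Zc].
Qed.

End Coefficients.

Lemma cube_root_n_pos (n : nat) : 0 < cube_root_n n.
Proof. unfold cube_root_n, Rpower; apply exp_pos. Qed.

Lemma cube_root_n_cube (n : nat) : (0 < n)%nat -> cube_root_n n ^ 3 = INR n.
Proof.
  intros Hn; unfold cube_root_n; simpl; rewrite Rmult_1_r, <- !Rpower_plus.
  replace (1 / 3 + (1 / 3 + 1 / 3)) with 1 by field; apply Rpower_1, lt_0_INR; auto.
Qed.

Lemma Cscale_RtoC (r : R) (z : C) : Cscale r z = (RtoC r * z)%C.
Proof. apply C_ext; simpl; ring. Qed.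

Lemma Cscale_exp_Cexp (r : R) (v : C) : Cscale (exp r) (Cexp v) = cexp (RtoC r + v)%C.
Proof. unfold cexp, Cexp, Cscale; simpl; rewrite exp_plus, Rplus_0_l; apply C_ext; simpl; ring. Qed.

Lemma psi_cexp (a b : R) (z : C) : psi a b z = cexp (RtoC (kappa a b / 6) * z * z * z)%C.
Proof. unfold psi, cexp; f_equal; unfold kappa; apply C_ext; simpl; field. Qed.

Lemma modG_seq_Zc (a b : R) (m : nat) (z : C) :
  let cn := cube_root_n (S m) in
  modG_seq a b (S m) z =
  (/ RtoC (ising_Z a b (S m)) * (cexp (RtoC (- INR (S m) * mbar a b / cn) * z)
     * Zc b (S m) (RtoC a + RtoC (/ cn) * z)) * cexp (RtoC (- t_n a b (S m) / 2) * (z * z)))%C.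
Proof.
  intros cn; pose proof (cube_root_n_pos (S m)) as Hcn; fold cn in Hcn.
  pose proof (ising_Z_pos a b (S m)) as HZ.
  unfold modG_seq, ising_E; rewrite Cscale_RtoC, RtoC_inv by lra.
  change (Cmul ?x ?y) with (Cmult x y); f_equal.
  - f_equal; unfold Zc; rewrite <- Csum_scal.
    change (fold_right Cadd C0 (map ?F (configs (S m)))) with (Csum F (configs (S m))).
    apply Csum_ext; intros s.
    unfold ising_weight; rewrite Cscale_exp_Cexp; unfold weight; rewrite <- cexp_add; f_equal.
    unfold X_n; fold cn; rewrite Cscale_RtoC; apply C_ext; simpl; field; lra.
  - unfold cexp; rewrite Cscale_RtoC; reflexivity.
Qed.

Lemma Cdiv_neq0 (x y : C) : x <> 0%C -> y <> 0%C -> (x / y)%C <> 0%C.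
Proof.
  intros Hx Hy E; apply (f_equal Cmod) in E; rewrite Cmod_div, Cmod_0 in E by auto.
  pose proof (proj1 (Cmod_gt_0 _) Hx); pose proof (proj1 (Cmod_gt_0 _) Hy).
  assert (0 < Cmod x / Cmod y) by (apply Rdiv_lt_0_compat; auto); lra.
Qed.

Lemma Cpow_div (x y : C) (m : nat) : y <> 0%C -> ((x / y) ^ m)%C = (x ^ m / y ^ m)%C.
Proof. intros Hy; unfold Cdiv; rewrite Cpow_mult_l, Cpow_inv; auto. Qed.

Section Factorization.
Variables a b : R.

(* Since [n = cn^3] and [t_n = cn sigma], the linear and quadratic terms of [n log_eig_cubic (z / cn)]
   cancel the centering and the Gaussian factor; the cubic term leaves [psi]. *)
Lemma cexp_scaling_exponent (m : nat) (z : C) :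
  let cn := cube_root_n (S m) in
  let h := (RtoC (/ cn) * z)%C in
  (cexp (RtoC (INR m) * log_eig_cubic a b h) * cexp (RtoC (- INR (S m) * mbar a b / cn) * z)
   * cexp (RtoC (- t_n a b (S m) / 2) * (z * z)))%C = (psi a b z * cexp (- log_eig_cubic a b h))%C.
Proof.
  intros cn h.
  pose proof (cube_root_n_pos (S m)) as Hcn; pose proof (cube_root_n_cube (S m) ltac:(lia)) as Hcube.
  fold cn in Hcn, Hcube.
  rewrite psi_cexp, <- !cexp_add; f_equal.
  replace (t_n a b (S m)) with (cn * sigma a b) by reflexivity.
  replace (INR m) with (cn ^ 3 - 1) by (rewrite Hcube, S_INR; ring); rewrite <- Hcube.
  unfold log_eig_cubic, cubic, h; destruct z as [x y]; apply C_ext; simpl; field; lra.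
Qed.

Definition main_factor (m : nat) (h : C) : C :=
  (coefP a b h / c0P a b * (eig_near a b h / eig_approx a b h) ^ m * cexp (- log_eig_cubic a b h)
   * (1 + coefM a b h / coefP a b h * (eig_far a b h / eig_near a b h) ^ m)
   * / (1 + c0M a b / c0P a b * (lamM a b / lamP a b) ^ m))%C.

Lemma modG_seq_factor (m : nat) (z : C) :
  let h := (RtoC (/ cube_root_n (S m)) * z)%C in
  (eig_near a b h - eig_far a b h)%C <> 0%C -> eig_near a b h <> 0%C -> coefP a b h <> 0%C ->
  modG_seq a b (S m) z = (psi a b z * main_factor m h)%C.
Proof.
  intros h Hne Hl Hc.
  pose proof (cube_root_n_pos (S m)) as Hcn.
  set (cn := cube_root_n (S m)) in *.
  pose proof (c0P_pos a b) as Hc0; pose proof (lamP_pos a b) as HL; pose proof (ising_Z_pos a b (S m)) as HZ.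
  assert (Hw : eig_approx a b h <> 0%C)
    by (unfold eig_approx; apply Cmult_neq_0; [apply RtoC_neq0; lra | apply cexp_neq0]).
  set (X := cexp (RtoC (INR m) * log_eig_cubic a b h)).
  assert (HX : X <> 0%C) by apply cexp_neq0.
  assert (Hlam : (eig_near a b h ^ m = (eig_near a b h / eig_approx a b h) ^ m * (lamP a b ^ m * X))%C).
  { unfold X; rewrite <- cexp_pow, <- !Cpow_mult_l; f_equal; unfold eig_approx; field.
    split; [apply cexp_neq0 | apply RtoC_neq0; lra]. }
  pose proof (cexp_scaling_exponent m z) as Hexp; cbv zeta in Hexp; fold cn h X in Hexp.
  assert (HZc : (c0P a b * lamP a b ^ m + c0M a b * lamM a b ^ m)%C <> 0%C)
    by (rewrite <- ising_Z_closed_form; apply RtoC_neq0; lra).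
  assert (HLm : (RtoC (lamP a b) ^ m)%C <> 0%C) by (apply Cpow_nz, RtoC_neq0; lra).
  assert (Hlw : ((eig_near a b h / eig_approx a b h) ^ m)%C <> 0%C)
    by (apply Cpow_nz, Cdiv_neq0; auto).
  rewrite modG_seq_Zc; fold cn h; match goal with |- ?x = ?y => change (@eq C x y) end.
  rewrite Zc_closed_form, ising_Z_closed_form by auto.
  unfold main_factor; rewrite (Cpow_div (eig_far a b h)), (Cpow_div (RtoC (lamM a b))), !Hlam
    by (auto; apply RtoC_neq0; lra).
  transitivity (coefP a b h / c0P a b * (eig_near a b h / eig_approx a b h) ^ m
     * (1 + coefM a b h / coefP a b h
            * (eig_far a b h ^ m / ((eig_near a b h / eig_approx a b h) ^ m * (lamP a b ^ m * X))))
     * / (1 + c0M a b / c0P a b * (lamM a b ^ m / lamP a b ^ m))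
     * (X * cexp (RtoC (- INR (S m) * mbar a b / cn) * z) * cexp (RtoC (- t_n a b (S m) / 2) * (z * z))))%C.
  - field; repeat split; auto; apply RtoC_neq0; lra.
  - rewrite Hexp; field; repeat split; auto; apply RtoC_neq0; lra.
Qed.

End Factorization.

Lemma Cmod_mul_sub1 (x y : C) (e1 e2 : R) : Cmod (x - 1) <= e1 -> Cmod (y - 1) <= e2 ->
  Cmod (x * y - 1) <= e1 + e2 + e1 * e2.
Proof.
  intros H1 H2; replace (x * y - 1)%C with ((x - 1) + (y - 1) + (x - 1) * (y - 1))%C by ring.
  pose proof (Cmod_ge_0 (x - 1)); pose proof (Cmod_ge_0 (y - 1)).
  eapply Rle_trans; [apply Cmod_triangle|]; rewrite Cmod_mult.
  pose proof (Cmod_triangle (x - 1) (y - 1)); pose proof (Rmult_le_compat _ _ _ _ H H0 H1 H2); lra.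
Qed.

Lemma Cmod_mul5_sub1 (x1 x2 x3 x4 x5 : C) (e : R) : 0 <= e <= 1 ->
  Cmod (x1 - 1) <= e -> Cmod (x2 - 1) <= e -> Cmod (x3 - 1) <= e -> Cmod (x4 - 1) <= e ->
  Cmod (x5 - 1) <= e -> Cmod (x1 * x2 * x3 * x4 * x5 - 1) <= 31 * e.
Proof.
  intros He H1 H2 H3 H4 H5.
  assert (M2 : Cmod (x1 * x2 - 1) <= 3 * e) by (pose proof (Cmod_mul_sub1 _ _ _ _ H1 H2); nra).
  assert (M3 : Cmod (x1 * x2 * x3 - 1) <= 7 * e) by (pose proof (Cmod_mul_sub1 _ _ _ _ M2 H3); nra).
  assert (M4 : Cmod (x1 * x2 * x3 * x4 - 1) <= 15 * e) by (pose proof (Cmod_mul_sub1 _ _ _ _ M3 H4); nra).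
  pose proof (Cmod_mul_sub1 _ _ _ _ M4 H5); nra.
Qed.

Lemma pow_1_plus_sub1 (t : R) (m : nat) : 0 <= t -> INR m * t <= 1 / 2 -> (1 + t) ^ m - 1 <= 2 * INR m * t.
Proof.
  intros Ht Hm.
  assert (Hb : (1 + t) ^ m * (1 - INR m * t) <= 1).
  { clear Hm; induction m as [|m IH]; [simpl; lra|].
    rewrite S_INR; simpl; pose proof (pow_le (1 + t) m ltac:(lra)); pose proof (pos_INR m).
    assert (0 <= (1 + t) ^ m * ((INR m + 1) * t * t)) by (apply Rmult_le_pos; [auto | nra]).
    nra. }
  pose proof (pow_le (1 + t) m ltac:(lra)); pose proof (pos_INR m).
  assert (0 <= INR m * t) by nra; nra.
Qed.

Lemma Cmod_pow_sub1 (x : C) (e : R) (m : nat) : 0 <= e -> INR m * e <= 1 / 2 ->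
  Cmod (x - 1) <= e -> Cmod (x ^ m - 1) <= 2 * INR m * e.
Proof.
  intros He Hm H; eapply Rle_trans; [|apply pow_1_plus_sub1; auto].
  clear Hm; induction m as [|m IH]; simpl.
  - replace (1 - 1)%C with (RtoC 0) by ring; rewrite Cmod_0; lra.
  - replace (x * x ^ m - 1)%C with (x * (x ^ m - 1) + (x - 1))%C by ring.
    assert (Hx : Cmod x <= 1 + e).
    { replace x with ((x - 1) + 1)%C at 1 by ring.
      eapply Rle_trans; [apply Cmod_triangle|]; rewrite Cmod_1; lra. }
    eapply Rle_trans; [apply Cmod_triangle|]; rewrite Cmod_mult.
    pose proof (Cmod_ge_0 (x ^ m - 1)); pose proof (Cmod_ge_0 x).
    pose proof (Rmult_le_compat _ _ _ _ H1 H0 Hx IH); lra.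
Qed.

Lemma Cmod_inv_sub1 (r : C) : Cmod r <= 1 / 2 -> Cmod (/ (1 + r) - 1) <= 2 * Cmod r.
Proof.
  intros H.
  assert (Hl : 1 / 2 <= Cmod (1 + r)).
  { pose proof (Cmod_triangle (1 + r) (- r)) as T; replace (1 + r + - r)%C with (RtoC 1) in T by ring.
    rewrite Cmod_1, Cmod_opp in T; lra. }
  assert (Hnz : (1 + r)%C <> 0%C) by (intro E; rewrite E, Cmod_0 in Hl; lra).
  replace (/ (1 + r) - 1)%C with (- r / (1 + r))%C by (field; auto).
  rewrite Cmod_div, Cmod_opp by auto; pose proof (Cmod_ge_0 r).
  apply Rle_trans with (Cmod r / (1 / 2)); [apply Rmult_le_compat_l; [|apply Rinv_le_contravar]; lra|].
  right; field.
Qed.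

Lemma eventually_pow_le (q e : R) : 0 <= q < 1 -> 0 < e -> eventually (fun m => q ^ m <= e).
Proof.
  intros Hq He; destruct (pow_lt_1_zero q ltac:(rewrite Rabs_pos_eq; lra) e He) as [N HN].
  exists N; intros m Hm; pose proof (HN m Hm); rewrite Rabs_pos_eq in H by (apply pow_le; lra); lra.
Qed.

Lemma eventually_cube_root_n_ge (T : R) : eventually (fun n => T <= cube_root_n n).
Proof.
  destruct (INR_unbounded (Rabs T ^ 3)) as [N HN]; exists (S N); intros n Hn.
  assert (HT : Rabs T ^ 3 < cube_root_n n ^ 3).
  { rewrite cube_root_n_cube by lia; apply Rlt_le_trans with (INR N); [auto | apply le_INR; lia]. }
  pose proof (cube_root_n_pos n); pose proof (Rabs_pos T); pose proof (Rle_abs T).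
  destruct (Rle_or_lt (Rabs T) (cube_root_n n)); [lra|].
  pose proof (pow_incr (cube_root_n n) (Rabs T) 3 ltac:(lra)); lra.
Qed.

Lemma eventually_S (P : nat -> Prop) : eventually P -> eventually (fun m => P (S m)).
Proof. intros [N HN]; exists N; intros m Hm; apply HN; lia. Qed.

Lemma Cmod_scaled_le (R c : R) (z : C) : 0 < c -> Cmod z <= R -> Cmod (RtoC (/ c) * z)%C <= Rabs R / c.
Proof.
  intros Hc Hz; rewrite Cmod_mult, Cmod_R, Rabs_pos_eq by (left; apply Rinv_0_lt_compat; lra).
  unfold Rdiv; rewrite Rmult_comm; apply Rmult_le_compat_r; [left; apply Rinv_0_lt_compat; lra|].
  pose proof (Rle_abs R); lra.
Qed.

Lemma Rmult_le_div_succ (B x eta : R) : 0 <= B -> 0 < eta -> x <= eta / (B + 1) -> B * x <= eta.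
Proof.
  intros HB He Hx; apply Rmult_le_compat_l with (r := B) in Hx; auto.
  eapply Rle_trans; [exact Hx|].
  apply Rle_trans with (eta * (B / (B + 1))); [right; field; lra|].
  rewrite <- (Rmult_1_r eta) at 2; apply Rmult_le_compat_l; [lra|].
  apply Rmult_le_reg_r with (B + 1); [lra|]; unfold Rdiv; rewrite Rmult_assoc, Rinv_l; lra.
Qed.

Lemma quartic_scaling_bound (K R c eta x : R) (m : nat) : 0 < c -> 0 < eta -> 0 <= K -> 0 <= R ->
  0 <= x <= R / c -> INR m <= c ^ 3 -> 2 * K * R ^ 4 / eta <= c -> INR m * (K * x ^ 4) <= eta / 2.
Proof.
  intros Hc He HK HR Hx Hm HcK.
  assert (Hx4 : x ^ 4 <= (R / c) ^ 4) by (apply pow_incr; lra).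
  apply Rle_trans with (c ^ 3 * (K * (R / c) ^ 4)).
  { apply Rmult_le_compat; [apply pos_INR | apply Rmult_le_pos; [lra | apply pow_le; lra] | auto |].
    apply Rmult_le_compat_l; auto. }
  replace (c ^ 3 * (K * (R / c) ^ 4)) with (K * R ^ 4 / c) by (field; lra).
  apply Rmult_le_reg_r with (2 * c / eta); [apply Rdiv_lt_0_compat; lra|].
  replace (K * R ^ 4 / c * (2 * c / eta)) with (2 * K * R ^ 4 / eta) by (field; lra).
  replace (eta / 2 * (2 * c / eta)) with c by (field; lra); auto.
Qed.

Section Estimates.
Variables a b : R.

Lemma near0_nondegenerate :
  near0 (fun h => (eig_near a b h - eig_far a b h)%C <> 0%C /\ eig_near a b h <> 0%C /\ coefP a b h <> 0%C).
Proof.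
  pose proof (lamP_pos a b); pose proof (c0P_pos a b).
  repeat apply near0_and.
  - apply near0_eig_near_neq_far.
  - apply (is_O0_neq0 _ (RtoC (lamP a b))); [apply RtoC_neq0; lra | apply is_O0_eig_near].
  - apply (is_O0_neq0 _ (RtoC (c0P a b))); [apply RtoC_neq0; lra | apply is_O0_coefP].
Qed.

Lemma is_O0_coefP_ratio : is_O0 1 (fun h => coefP a b h / c0P a b - 1)%C.
Proof.
  pose proof (c0P_pos a b).
  apply (is_O0_ext _ _ (fun h => / c0P a b * (coefP a b h - c0P a b))%C);
    [apply near0_all; intros; field; apply RtoC_neq0; lra|].
  apply is_O0_scal, is_O0_coefP.
Qed.

Lemma is_O0_cexp_opp_log_eig_cubic : is_O0 1 (fun h => cexp (- log_eig_cubic a b h) - 1)%C.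
Proof.
  apply (is_O0_ext _ _ (fun h => cexp (- log_eig_cubic a b h) - exp_partial 1 (- log_eig_cubic a b h))%C);
    [apply near0_all; intros; rewrite exp_partial_1; reflexivity|].
  apply is_O0_cexp_remainder, is_O0_opp, is_O0_cubic.
Qed.

Lemma near0_coef_ratio_bounded : exists B, near0 (fun h => Cmod (coefM a b h / coefP a b h) <= B).
Proof.
  pose proof (c0P_pos a b).
  assert (Hc : RtoC (c0P a b) <> 0%C) by (apply RtoC_neq0; lra).
  apply is_O0_bounded, (is_O0_mul 0 0); [apply (is_O0_lin_bounded _ _ (is_O0_coefM a b))|].
  exact (proj2 (is_O0_inv _ _ Hc (is_O0_coefP a b))).
Qed.

Lemma near0_eigen_ratio :
  exists rho, 0 <= rho < 1 /\ near0 (fun h => Cmod (eig_far a b h / eig_near a b h) <= rho).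
Proof.
  pose proof (lamP_pos a b) as HL; pose proof (Rabs_lamM_lt_lamP a b) as HML.
  set (q := Rabs (lamM a b) / lamP a b).
  assert (Hq : 0 <= q < 1).
  { unfold q; split; [apply Rmult_le_pos; [apply Rabs_pos | left; apply Rinv_0_lt_compat; lra]|].
    apply Rmult_lt_reg_r with (lamP a b); [lra|]; unfold Rdiv; rewrite Rmult_assoc, Rinv_l; lra. }
  exists ((1 + q) / 2); split; [lra|].
  assert (HLc : RtoC (lamP a b) <> 0%C) by (apply RtoC_neq0; lra).
  assert (Hlin : is_O0 1 (fun h => eig_far a b h * / eig_near a b h - lamM a b * / lamP a b)%C)
    by exact (is_O0_lin_mul _ _ _ _ (is_O0_eig_far a b) (proj1 (is_O0_inv _ _ HLc (is_O0_eig_near a b)))).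
  eapply near0_imp; [| exact (is_O0_small 1 _ ((1 - q) / 2) (le_n 1) ltac:(lra) Hlin)]; intros h H.
  cbv beta in H; unfold Cdiv.
  replace (eig_far a b h * / eig_near a b h)%C
    with ((eig_far a b h * / eig_near a b h - lamM a b * / lamP a b) + lamM a b * / lamP a b)%C by ring.
  eapply Rle_trans; [apply Cmod_triangle|].
  rewrite <- RtoC_inv, <- RtoC_mult, Cmod_R by lra.
  replace (Rabs (lamM a b * / lamP a b)) with q
    by (unfold q, Rdiv; rewrite Rabs_mult, Rabs_inv, (Rabs_pos_eq (lamP a b)) by lra; reflexivity).
  rewrite <- RtoC_inv, <- RtoC_mult in H by lra; lra.
Qed.

Lemma Cmod_main_factor_sub1 (m : nat) (h : C) (eta K B rho : R) :
  0 < eta <= 1 -> 0 <= K -> 0 <= rho ->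
  Cmod (coefP a b h / c0P a b - 1) <= eta ->
  Cmod (eig_near a b h / eig_approx a b h - 1) <= K * Cmod h ^ 4 -> INR m * (K * Cmod h ^ 4) <= eta / 2 ->
  Cmod (cexp (- log_eig_cubic a b h) - 1) <= eta ->
  Cmod (coefM a b h / coefP a b h) <= B -> Cmod (eig_far a b h / eig_near a b h) <= rho ->
  B * rho ^ m <= eta ->
  Cmod (c0M a b / c0P a b * (lamM a b / lamP a b) ^ m)%C <= eta / 2 ->
  Cmod (main_factor a b m h - 1) <= 31 * eta.
Proof.
  intros Heta HK Hrho Hc Hlw Hm Hu HB Hr HBr H0.
  unfold main_factor; apply Cmod_mul5_sub1; [lra | exact Hc | | exact Hu | |].
  - assert (0 <= K * Cmod h ^ 4) by (apply Rmult_le_pos; [lra | apply pow_le, Cmod_ge_0]).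
    eapply Rle_trans; [apply Cmod_pow_sub1 with (e := K * Cmod h ^ 4); auto; lra | lra].
  - replace (1 + coefM a b h / coefP a b h * (eig_far a b h / eig_near a b h) ^ m - 1)%C
      with (coefM a b h / coefP a b h * (eig_far a b h / eig_near a b h) ^ m)%C by ring.
    rewrite Cmod_mult, Cmod_pow; eapply Rle_trans; [|exact HBr].
    apply Rmult_le_compat; [apply Cmod_ge_0 | apply pow_le, Cmod_ge_0 | exact HB |].
    apply pow_incr; split; [apply Cmod_ge_0 | exact Hr].
  - eapply Rle_trans; [apply Cmod_inv_sub1; lra | lra].
Qed.

Lemma near0_main_factor_bounds (eta : R) : 0 < eta ->
  exists K B rho, 0 <= K /\ 0 <= B /\ 0 <= rho < 1 /\ near0 (fun h =>
    ((eig_near a b h - eig_far a b h)%C <> 0%C /\ eig_near a b h <> 0%C /\ coefP a b h <> 0%C)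
    /\ Cmod (coefP a b h / c0P a b - 1) <= eta /\ Cmod (cexp (- log_eig_cubic a b h) - 1) <= eta
    /\ Cmod (eig_near a b h / eig_approx a b h - 1) <= K * Cmod h ^ 4
    /\ Cmod (coefM a b h / coefP a b h) <= B /\ Cmod (eig_far a b h / eig_near a b h) <= rho).
Proof.
  intros Heta.
  destruct (is_O0_eig_near_div_approx a b) as [K HK].
  destruct near0_coef_ratio_bounded as [B HB].
  destruct near0_eigen_ratio as [rho [Hrho Hrat]].
  exists (Rabs K), (Rabs B), rho; split; [apply Rabs_pos | split; [apply Rabs_pos | split; [exact Hrho|]]].
  eapply near0_imp; [| exact (near0_and _ _ near0_nondegenerate (near0_and _ _
    (is_O0_small 1 _ eta (le_n 1) Heta is_O0_coefP_ratio) (near0_and _ _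
    (is_O0_small 1 _ eta (le_n 1) Heta is_O0_cexp_opp_log_eig_cubic)
    (near0_and _ _ HK (near0_and _ _ HB Hrat)))))].
  intros h (Hnd & H1 & H2 & H3 & H4 & H5); refine (conj Hnd (conj H1 (conj H2 (conj _ (conj _ H5))))).
  - eapply Rle_trans; [exact H3|]; apply Rmult_le_compat_r; [apply pow_le, Cmod_ge_0 | apply Rle_abs].
  - eapply Rle_trans; [exact H4 | apply Rle_abs].
Qed.

Lemma eventually_main_factor_close (R0 eta : R) : 0 < eta <= 1 ->
  eventually (fun m => forall z, Cmod z <= R0 ->
    let h := (RtoC (/ cube_root_n (S m)) * z)%C in
    ((eig_near a b h - eig_far a b h)%C <> 0%C /\ eig_near a b h <> 0%C /\ coefP a b h <> 0%C)
    /\ Cmod (main_factor a b m h - 1) <= 31 * eta).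
Proof.
  intros Heta.
  destruct (near0_main_factor_bounds eta ltac:(lra)) as (K & B & rho & HK & HB & Hrho & r & Hr & Hnear).
  set (R1 := Rabs R0); set (q := Rabs (lamM a b / lamP a b)); set (cr := Rabs (c0M a b / c0P a b)).
  assert (HR1 : 0 <= R1) by apply Rabs_pos; assert (Hcr : 0 <= cr) by apply Rabs_pos.
  assert (HeB : 0 < eta / (B + 1)) by (apply Rdiv_lt_0_compat; lra).
  assert (Hecr : 0 < eta / (2 * (cr + 1))) by (apply Rdiv_lt_0_compat; lra).
  assert (HKR : 0 <= 2 * K * R1 ^ 4 / eta)
    by (apply Rmult_le_pos; [pose proof (pow_le R1 4 HR1); nra | left; apply Rinv_0_lt_compat; lra]).
  assert (HR1r : 0 <= R1 / r) by (apply Rmult_le_pos; [lra | left; apply Rinv_0_lt_compat; lra]).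
  generalize (filter_and _ _ (eventually_S _ (eventually_cube_root_n_ge (R1 / r + 2 * K * R1 ^ 4 / eta)))
    (filter_and _ _ (eventually_pow_le rho _ Hrho HeB)
                    (eventually_pow_le q _ (lamM_div_lamP_bound a b) Hecr))).
  apply filter_imp; intros m [Hcn [Hrho_m Hq_m]] z Hz h.
  pose proof (cube_root_n_pos (S m)) as Hc0; pose proof (cube_root_n_cube (S m) ltac:(lia)) as Hcube.
  set (cn := cube_root_n (S m)) in *.
  assert (Hh : Cmod h <= R1 / cn) by (apply Cmod_scaled_le; lra).
  assert (Hhr : Cmod h <= r).
  { eapply Rle_trans; [exact Hh|]; apply Rmult_le_reg_r with (cn / r); [apply Rdiv_lt_0_compat; lra|].
    replace (R1 / cn * (cn / r)) with (R1 / r) by (field; lra).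
    replace (r * (cn / r)) with cn by (field; lra); lra. }
  destruct (Hnear h Hhr) as (Hnd & Hf1 & Hf3 & Hf2 & HBh & Hrh).
  split; [exact Hnd|].
  apply (Cmod_main_factor_sub1 m h eta K B rho); [lra | lra | lra | exact Hf1 | exact Hf2 | | exact Hf3
                                                  | exact HBh | exact Hrh | apply Rmult_le_div_succ; lra |].
  - apply (quartic_scaling_bound K R1 cn eta); try lra; [split; [apply Cmod_ge_0 | exact Hh] |].
    rewrite Hcube, S_INR; lra.
  - rewrite Cmod_mult, Cmod_pow, <- !RtoC_div, !Cmod_R
      by (pose proof (c0P_pos a b); pose proof (lamP_pos a b); lra).
    fold q cr; apply Rmult_le_div_succ; [lra | lra|].
    replace (eta / 2 / (cr + 1)) with (eta / (2 * (cr + 1))) by (field; lra); lra.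
Qed.

End Estimates.

Lemma Cmod_psi_le (a b R0 : R) (z : C) : Cmod z <= R0 ->
  Cmod (psi a b z) <= exp (Rabs (kappa a b / 6) * R0 ^ 3).
Proof.
  intros Hz; rewrite psi_cexp; eapply Rle_trans; [apply Cmod_cexp_le|]; apply exp_le_exp.
  rewrite !Cmod_mult, Cmod_R; pose proof (Cmod_ge_0 z); pose proof (Rabs_pos (kappa a b / 6)).
  replace (Rabs (kappa a b / 6) * Cmod z * Cmod z * Cmod z) with (Rabs (kappa a b / 6) * Cmod z ^ 3) by ring.
  apply Rmult_le_compat_l; [lra | apply pow_incr; lra].
Qed.

Theorem theorem2p1 (alpha beta : R) (hbeta : 0 <= beta) :
  forall (Rad eps : R), 0 < eps ->
  exists N : nat, forall n : nat, (N <= n)%nat ->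
    forall z : Cx, Cnorm z <= Rad ->
      Cnorm (Csub (modG_seq alpha beta n z) (psi alpha beta z)) < eps.
Proof.
  intros Rad eps Heps.
  set (P := exp (Rabs (kappa alpha beta / 6) * Rad ^ 3)); assert (HP : 0 < P) by apply exp_pos.
  set (eta := Rmin 1 (eps / (32 * P))).
  assert (Heta : 0 < eta <= 1)
    by (split; [apply Rmin_glb_lt; [lra | apply Rdiv_lt_0_compat; lra] | apply Rmin_l]).
  destruct (eventually_main_factor_close alpha beta Rad eta Heta) as [N HN].
  exists (S N); intros n Hn z Hz; destruct n as [|m]; [lia|].
  change (Cnorm z) with (Cmod z) in Hz; change (Cnorm (Csub ?X ?Y)) with (Cmod (X - Y)%C).
  destruct (HN m ltac:(lia) z Hz) as [[Hne [Hl Hc]] Hclose].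
  rewrite modG_seq_factor by auto.
  replace (psi alpha beta z * main_factor alpha beta m (RtoC (/ cube_root_n (S m)) * z) - psi alpha beta z)%C
    with (psi alpha beta z * (main_factor alpha beta m (RtoC (/ cube_root_n (S m)) * z) - 1))%C by ring.
  rewrite Cmod_mult.
  apply Rle_lt_trans with (P * (31 * eta)).
  - apply Rmult_le_compat; [apply Cmod_ge_0 | apply Cmod_ge_0 | apply Cmod_psi_le, Hz | exact Hclose].
  - assert (eta <= eps / (32 * P)) by apply Rmin_r.
    apply Rle_lt_trans with (P * (31 * (eps / (32 * P)))); [apply Rmult_le_compat_l; lra|].
    replace (P * (31 * (eps / (32 * P)))) with (31 / 32 * eps) by (field; lra); lra.
Qed.
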